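(* Let $\mathcal D$ be a $(\gamma,V)$-stable distribution of $\mathbf X$. Consider a run of the algorithm described in the context in which the event $\mathcal E$ holds. Then the algorithm accepts at least $|V|$ families until the end of the first round $t$ which satisfies $\epsilon_t\le\gamma/(2d)$.
   Context: Setting. $\mathbf{X}=(X_1,\dots,X_d)$ is a random vector; $k$ a fixed positive integer; natural logarithms. A family is $f=\langle X_i,\Pi\rangle$ with $\Pi\subseteq\{X_1,\dots,X_d\}\setminus\{X_i\}$, $|\Pi|\le k$; $\mathcal F_{d,k}$ the set of families; $H(f)=H(X_i\mid\Pi)$. $\mathcal G_{d,k}$ = DAGs over the variables with in-degree $\le k$, identified with their family sets; $\mathcal S(F)=-\sum_{f\in F}H(f)$; $\mathcal S^*=\max_{G\in\mathcal G_{d,k}}\mathcal S(G)$. $\mathcal E_{d,k}$ is the set of Markov equivalence classes (ECs) on $\mathcal G_{d,k}$; graphs in an EC share a score. For $V\subseteq\mathbf X$, $\mathcal G_V$ is the set of DAGs over $V$ with in-degree $\le k$. $(\gamma,V)$-stable: for $\gamma>0$ and $V\subseteq\mathbf X$, (1) in every $G\in\mathcal G_{d,k}$ with $\mathcal S(G)\ge\mathcal S^*-\gamma$ all parents of every variable in $V$ are in $V$; (2) for the marginal distribution on $V$ (over $\mathcal G_V$) there is a unique optimal EC and the score gap between the best and second-best EC is more than $\gamma$. Observation model. Each sample is an independent copy of $\mathbf X$ of which only a chosen set of $k+1$ coordinates is revealed. $\hat H$ is an estimator of $H(f)$ from the samples where all variables of $f$ were observed, and $N(\epsilon,\delta)$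 is such that for any fixed $f$, at least $N(\epsilon,\delta)$ such samples give $|\hat H(f)-H(f)|\le\epsilon$ with probability $\ge1-\delta$. Notation: $\mathcal F_{\mathrm{act}}(\mathcal V)$ = families whose child is not in $\mathcal V\subseteq[d]$; $\mathcal G_j=\{G\in\mathcal G_{d,k}:\mathcal A_j\subseteq G\}$; $E^{(j)}=E\cap\mathcal G_j$; $U(\mathcal A)=\bigcup_{G\in\mathcal A}G$; $\hat H_t(f)$ = estimate from all samples up to round $t$; $\hat{\mathcal S}_t(G)=-\sum_{f\in G}\hat H_t(f)$; $\hat{\mathcal S}_t(\mathcal A)=\max_{G\in\mathcal A}\hat{\mathcal S}_t(G)$. Algorithm (inputs $d,k,\delta\in(0,1),\epsilon,\epsilon_1>0$). Initialize $\mathcal A_1=\emptyset,\mathcal V=\emptyset,N_0=0,t=1,j=1,T=\lceil\log_2(2d\epsilon_1/\epsilon)\rceil$. While $\epsilon_t>\epsilon/(d-|\mathcal V|)$ (a ''round'' $t$): $N_t=N(\epsilon_t/2,\delta/(T|\mathcal F_{\mathrm{act}}(\mathcal V)|))$; observe each $(k+1)$-subset of $[d]$ not contained in $\mathcal V$ in $N_t-N_{t-1}$ new samples; repeat the following ''iteration'' until $\mathcal A_j=\mathcal A_{j-1}$: $\theta_j=(d-|\mathcal V|)\epsilon_t$; $\hat G_j\in\arg\max_{G\in\mathcal G_j}\hat{\mathcal S}_t(G)$, $\hat E_j$ its EC; $L_j=\{E\in\mathcal E_{d,k}:E^{(j)}\neq\emptyset,\hat{\mathcal S}_t(\hat E_j^{(j)})-\hat{\mathcal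 S}_t(E^{(j)})\le\theta_j\}$; if some $f\in U(\hat E_j^{(j)})\cap\mathcal F_{\mathrm{act}}(\mathcal V)$ satisfies $f\in U(E^{(j)})$ for all $E\in L_j$, accept one such $f=\langle X_v,\Pi\rangle$: $\mathcal V\leftarrow\mathcal V\cup\{v\}$, $\mathcal A_{j+1}=\mathcal A_j\cup\{f\}$; else $\mathcal A_{j+1}=\mathcal A_j$; $j\leftarrow j+1$. After the iterations, if $|\mathcal V|=d$ return $\mathcal A_j$; else $t\leftarrow t+1$, $\epsilon_t=\epsilon_{t-1}/2$. After the while loop: $\epsilon_{\mathrm{last}}=\epsilon/(d-|\mathcal V|)$, $N_T=N(\epsilon_{\mathrm{last}}/2,\delta/(T|\mathcal F_{\mathrm{act}}(\mathcal V)|))$, observe remaining subsets in $N_T-N_{T-1}$ more samples, return a maximizer of $\hat{\mathcal S}_T$ over $\mathcal G_j$. Event: with $\mathcal V_t$ the value of $\mathcal V$ at the start of round $t$, $\mathcal E:=\{\forall t\in[T],\forall f\in\mathcal F_{\mathrm{act}}(\mathcal V_t): |\hat H_t(f)-H(f)|\le\epsilon_t/2\}$. *)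

From mathcomp Require Import all_boot all_order all_algebra.
From mathcomp Require Import boolp reals exp.

Set Implicit Arguments.
Unset Strict Implicit.
Unset Printing Implicit Defensive.

Import Order.TTheory GRing.Theory Num.Theory.
Local Open Scope ring_scope.

(* Random vector X = (X_1,...,X_d) with values in a finite alphabet A.        *)

Definition assign (d : nat) (A : finType) := {ffun 'I_d -> A}.

Definition is_pmf (R : realType) (d : nat) (A : finType)
  (P : {ffun (assign d A) -> R}) : Prop :=
  (forall x, 0 <= P x) /\ \sum_x P x = 1.

Definition margp (R : realType) (d : nat) (A : finType)
  (P : {ffun (assign d A) -> R}) (S : {set 'I_d}) (y : assign d A) : R :=
  \sum_(z : assign d A | [forall i in S, z i == y i]) P z.

(* joint Shannon entropy (natural log) of the sub-vector X_S *)
Definition Hjoint (R : realType) (d : nat) (A : finType)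
  (P : {ffun (assign d A) -> R}) (S : {set 'I_d}) : R :=
  - \sum_(y : assign d A) P y * ln (margp P S y).

(* families f = <X_i, Pi> ; child f = f.1, parent set f.2 *)
Definition fam (d : nat) := ('I_d * {set 'I_d})%type.

Definition is_family (d k : nat) (f : fam d) : bool :=
  (f.1 \notin f.2) && (#|f.2| <= k)%N.

Definition Hfam (R : realType) (d : nat) (A : finType)
  (P : {ffun (assign d A) -> R}) (f : fam d) : R :=
  Hjoint P (f.1 |: f.2) - Hjoint P f.2.

(* Directed graphs on the variables, given by their parent sets.             *)

Definition graph (d : nat) := {ffun 'I_d -> {set 'I_d}}.

Definition edge (d : nat) (G : graph d) : rel 'I_d := fun x y => x \in G y.

Definition acyclic (d : nat) (G : graph d) : Prop :=
  forall i j : 'I_d, j \in G i -> ~~ connect (edge G) i j.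

Definition DAGk (d k : nat) (G : graph d) : Prop :=
  (forall i, (#|G i| <= k)%N) /\ acyclic G.

Definition fams (d : nat) (G : graph d) : {set fam d} :=
  [set (i, G i) | i : 'I_d].

Definition Ufams (d : nat) (B : {set graph d}) : {set fam d} :=
  \bigcup_(G in B) fams G.

Definition adj (d : nat) (G : graph d) : rel 'I_d :=
  fun x y => (x \in G y) || (y \in G x).

Definition trail (d : nat) (G : graph d) (x y : 'I_d) (p : seq 'I_d) : bool :=
  [&& path (adj G) x p, last x p == y & uniq (x :: p)].

Definition open_at (d : nat) (G : graph d) (Z : {set 'I_d})
  (x : 'I_d) (p : seq 'I_d) (n : nat) : bool :=
  let q := x :: p in
  let a := nth x q n.-1 in
  let m := nth x q n in
  let b := nth x q n.+1 in
  if (a \in G m) && (b \in G m)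
  then [exists w, connect (edge G) m w && (w \in Z)]
  else m \notin Z.

Definition d_connected (d : nat) (G : graph d) (x y : 'I_d) (Z : {set 'I_d}) : Prop :=
  exists p : seq 'I_d, trail G x y p /\
    forall n, (0 < n)%N -> (n < size p)%N -> open_at G Z x p n.

Definition d_separated (d : nat) (G : graph d) (x y : 'I_d) (Z : {set 'I_d}) : Prop :=
  ~ d_connected G x y Z.

Definition markov_eq (d : nat) (G1 G2 : graph d) : Prop :=
  forall (x y : 'I_d) (Z : {set 'I_d}), x != y -> x \notin Z -> y \notin Z ->
    (d_separated G1 x y Z <-> d_separated G2 x y Z).

Definition EC (d k : nat) (G : graph d) : {set graph d} :=
  [set G' | `[< DAGk k G' /\ markov_eq G G' >] ].

Definition Gsub (d k : nat) (Acc : {set fam d}) : {set graph d} :=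
  [set G | `[< DAGk k G /\ Acc \subset fams G >] ].

Definition score (R : realType) (d : nat) (H : fam d -> R) (G : graph d) : R :=
  - \sum_(i : 'I_d) H (i, G i).

Definition scoreV (R : realType) (d : nat) (H : fam d -> R)
  (V : {set 'I_d}) (G : graph d) : R :=
  - \sum_(i in V) H (i, G i).

(* maximum of F over a (nonempty) finite set B of graphs; 0 if B is empty *)
Definition setmax (R : realType) (d : nat) (B : {set graph d}) (F : graph d -> R) : R :=
  match [pick G in B] with
  | Some G0 => \big[Num.max/F G0]_(G in B) F G
  | None => 0
  end.

(* G_V : DAGs over V with in-degree <= k (embedded: vertices outside V isolated) *)
Definition DAG_over (d k : nat) (V : {set 'I_d}) (G : graph d) : Prop :=
  DAGk k G /\ (forall i, (i \in V -> G i \subset V) /\ (i \notin V -> G i = set0)).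

Definition stable (R : realType) (d k : nat) (A : finType)
  (P : {ffun (assign d A) -> R}) (gamma : R) (V : {set 'I_d}) : Prop :=
  let H := Hfam P in
  let Sstar := setmax [set G | `[< DAGk k G >] ] (score H) in
  (forall G : graph d, DAGk k G -> Sstar - gamma <= score H G ->
     forall v, v \in V -> G v \subset V) /\
  (exists Gopt : graph d, DAG_over k V Gopt /\
     (forall G, DAG_over k V G -> scoreV H V G <= scoreV H V Gopt) /\
     (forall G, DAG_over k V G -> ~ markov_eq Gopt G ->
        gamma < scoreV H V Gopt - scoreV H V G)).

(* algorithm state: (A_j, V) *)
Definition state (d : nat) := ({set fam d} * {set 'I_d})%type.

(* eps_t = eps_1 / 2^(t-1), rounds numbered from 1 *)
Definition eps_r (R : realType) (eps1 : R) (t : nat) : R := eps1 / 2 ^+ t.-1.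

Definition is_argmax (R : realType) (d k : nat) (Hh : fam d -> R)
  (Acc : {set fam d}) (Gh : graph d) : Prop :=
  Gh \in Gsub k Acc /\ forall G, G \in Gsub k Acc -> score Hh G <= score Hh Gh.

Definition acceptable (R : realType) (d k : nat) (Hh : fam d -> R) (et : R)
  (s : state d) (Gh : graph d) (f : fam d) : Prop :=
  let Acc := s.1 in
  let V := s.2 in
  let theta := (d - #|V|)%:R * et in
  let Ehj := EC k Gh :&: Gsub k Acc in
  [/\ f \in Ufams Ehj,
      is_family k f /\ f.1 \notin V &
      forall G : graph d, DAGk k G ->
        EC k G :&: Gsub k Acc != set0 ->
        setmax Ehj (score Hh) - setmax (EC k G :&: Gsub k Acc) (score Hh) <= theta ->
        f \in Ufams (EC k G :&: Gsub k Acc)].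

Definition accept_step (R : realType) (d k : nat) (Hh : fam d -> R) (et : R)
  (s s' : state d) : Prop :=
  exists (Gh : graph d) (f : fam d),
    [/\ is_argmax k Hh s.1 Gh, acceptable k Hh et s Gh f &
        s' = (f |: s.1, f.1 |: s.2)].

Definition noaccept_step (R : realType) (d k : nat) (Hh : fam d -> R) (et : R)
  (s : state d) : Prop :=
  exists Gh : graph d, is_argmax k Hh s.1 Gh /\
    forall f, ~ acceptable k Hh et s Gh f.

Inductive round_exec (R : realType) (d k : nat) (Hh : fam d -> R) (et : R) :
  state d -> state d -> Prop :=
| round_stop s : noaccept_step k Hh et s -> round_exec k Hh et s s
| round_acc s s' s'' : accept_step k Hh et s s' -> round_exec k Hh et s' s'' ->
    round_exec k Hh et s s''.

Definition Tmax (R : realType) (d : nat) (eps eps1 : R) : int :=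
  Num.ceil (ln (2 * d%:R * eps1 / eps) / ln 2).

(* Under the event E each round keeps some optimal DAG inside G_j: the Markov
   equivalence class of an optimal graph of G_j always lies within theta of the
   estimated best class, so every accepted family occurs in a member of it, and
   Markov-equivalent DAGs have the same score (Chickering: they are linked by
   covered edge reversals, which preserve d-separation and the score).
   In round t0 the threshold theta is at most gamma / 2, so every graph the
   algorithm compares is gamma-close to optimal. By stability all of them have
   their V-part closed and Markov equivalent to the unique optimal class on V, so
   V-parts can be exchanged between them; thus the family of a vertex of V not
   yet in 𝒱 would lie in every class within theta and would be accepted. Hence
   V is covered when round t0 ends, and one family was accepted per covered
   vertex. *)

From mathcomp Require Import all_boot all_order all_algebra.
From mathcomp Require Import boolp reals exp.
From mathcomp Require Import zify ring lra.
Import Order.TTheory GRing.Theory Num.Theory.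

Set Implicit Arguments.
Unset Strict Implicit.
Unset Printing Implicit Defensive.

(** * Sequences and acyclic graphs *)

Section Excise.
Variable T : Type.
Implicit Types s : seq T.

Definition excise k l s := take k s ++ drop l s.

Lemma size_excise s k l : k <= l <= size s ->
  size (excise k l s) = (k + (size s - l))%N.
Proof. by move=> /andP [kl ls]; rewrite size_cat size_take size_drop; case: ltnP; lia. Qed.

Lemma nth_excise s k l p x0 : k <= l <= size s ->
  nth x0 (excise k l s) p = if p < k then nth x0 s p else nth x0 s (p + (l - k)).
Proof.
move=> /andP [kl ls]; rewrite nth_cat size_take.
have -> : (if k < size s then k else size s) = k by case: ltnP; lia.
case: ltnP => kp; first by rewrite nth_take.
by rewrite nth_drop; congr nth; lia.
Qed.

End Excise.

Lemma excise_uniq (T : eqType) (s : seq T) k l : uniq s -> k <= l -> uniq (excise k l s).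
Proof.
move=> us kl; apply: subseq_uniq us; rewrite -{2}(cat_take_drop k s) cat_subseq //.
have -> : drop l s = drop (l - k) (drop k s) by rewrite drop_drop; congr drop; lia.
exact: drop_subseq.
Qed.

Lemma index_rev_uniq (T : eqType) (s : seq T) c : uniq s -> c \in s ->
  index c (rev s) = (size s - (index c s).+1)%N.
Proof.
move=> us cs; have ci : index c s < size s by rewrite index_mem.
have urs : uniq (rev s) by rewrite rev_uniq.
have cir : index c (rev s) < size (rev s) by rewrite index_mem mem_rev.
apply/eqP; rewrite -(nth_uniq c cir _ urs); last by rewrite size_rev; lia.
rewrite nth_index ?mem_rev // nth_rev; last lia.
have -> : (size s - (size s - (index c s).+1).+1 = index c s)%N by lia.
by rewrite nth_index.
Qed.

Definition same_ends (T : Type) (x0 : T) (q q' : seq T) :=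
  [/\ 0 < size q', nth x0 q' 0 = nth x0 q 0 & nth x0 q' (size q').-1 = nth x0 q (size q).-1].

Lemma excise_same_ends (T : Type) (x0 : T) (q : seq T) k l :
  0 < k <= l -> l < size q -> same_ends x0 q (excise k l q).
Proof.
move=> kl lq; have kls : k <= l <= size q by lia.
rewrite /same_ends size_excise // !nth_excise //; split; first lia.
  by rewrite ifT //; lia.
by rewrite ifN; [congr nth | ]; lia.
Qed.

Lemma set_nth_same_ends (T : Type) (x0 : T) (q : seq T) i z :
  0 < i -> i.+1 < size q -> same_ends x0 q (set_nth x0 q i z).
Proof.
move=> i0 iq; rewrite /same_ends size_set_nth !nth_set_nth /=.
have -> : maxn i.+1 (size q) = size q by lia.
by split; [lia | rewrite ifN // | rewrite ifN //]; lia.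
Qed.

Section Acyclicity.
Variable d : nat.
Implicit Types (G : graph d) (a b : 'I_d).

Lemma acyclic_irrefl G a : acyclic G -> a \notin G a.
Proof. by move=> ac; apply/negP=> aa; have := ac a a aa; rewrite connect0. Qed.

Lemma acyclic_asym G a b : acyclic G -> a \in G b -> b \notin G a.
Proof. by move=> ac ab; apply/negP=> ba; have := ac b a ab; rewrite connect1. Qed.

Lemma connect_last_edge (e : rel 'I_d) a b : connect e a b -> a != b ->
  exists2 c, connect e a c & e c b.
Proof.
move=> /connectP [s]; elim/last_ind: s => [|s z _] /=; first by move=> _ ->; rewrite eqxx.
rewrite rcons_path last_rcons => /andP [es ez] -> _.
by exists (last a s) => //; apply/connectP; exists s.
Qed.

Lemma acyclic_connect_anti G a b :
  acyclic G -> connect (edge G) a b -> connect (edge G) b a -> a = b.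
Proof.
move=> ac ab ba; apply/eqP; apply/negPn/negP => /(connect_last_edge ab) [c ac' cb].
by have := ac b c cb; rewrite (connect_trans ba ac').
Qed.

Lemma rank_acyclic G (r : 'I_d -> nat) :
  (forall i j, j \in G i -> r j < r i) -> acyclic G.
Proof.
move=> hr.
have mono a b : connect (edge G) a b -> r a <= r b.
  move=> /connectP [p pp ->]; elim: p a pp => //= c p IH a /andP [ac pc].
  by have := hr _ _ ac; have := IH _ pc; lia.
by move=> i j ji; apply/negP => /mono; have := hr _ _ ji; lia.
Qed.

Lemma sub_acyclic G1 G2 : (forall i, G1 i \subset G2 i) -> acyclic G2 -> acyclic G1.
Proof.
move=> s ac i j ji; apply/negP => c.
have c2 : connect (edge G2) i j.
  by apply: connect_sub c => a b e; apply: connect1; exact: (subsetP (s b)).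
by have := ac _ _ (subsetP (s i) _ ji); rewrite c2.
Qed.

Definition ancestors G v := [set a | connect (edge G) a v].
Definition descendants G v := [set b | connect (edge G) v b].

Lemma card_ancestors_lt G a b : acyclic G -> connect (edge G) a b -> a != b ->
  #|ancestors G a| < #|ancestors G b|.
Proof.
move=> ac ab neq; apply: proper_card; apply/properP; split.
  by apply/subsetP => c; rewrite !inE => ca; exact: connect_trans ca ab.
exists b; rewrite !inE ?connect0 //; apply/negP => ba.
by move: neq; rewrite (acyclic_connect_anti ac ab ba) eqxx.
Qed.

Lemma card_descendants_lt G a b : acyclic G -> connect (edge G) a b -> a != b ->
  #|descendants G b| < #|descendants G a|.
Proof.
move=> ac ab neq; apply: proper_card; apply/properP; split.
  by apply/subsetP => c; rewrite !inE => bc; exact: connect_trans ab bc.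
exists a; rewrite !inE ?connect0 //; apply/negP => ba.
by move: neq; rewrite (acyclic_connect_anti ac ab ba) eqxx.
Qed.

Lemma card_ancestors_parent G i j : acyclic G -> j \in G i ->
  #|ancestors G j| < #|ancestors G i|.
Proof.
move=> ac ji; apply: card_ancestors_lt => //; first exact: connect1.
by apply: contraTneq ji => ->; exact: acyclic_irrefl.
Qed.

Lemma adjC G : symmetric (adj G).
Proof. by move=> a b; rewrite /adj orbC. Qed.

End Acyclicity.

(** * Open trails *)

Section Trails.
Variable d : nat.
Implicit Types (G : graph d) (Z : {set 'I_d}) (q : seq 'I_d).

(* [open_at G Z x p n] of the definitions is [open_triple] at the n-th node of
   x :: p. *)
Definition open_triple G Z (a m b : 'I_d) : bool :=
  if (a \in G m) && (b \in G m)
  then [exists w, connect (edge G) m w && (w \in Z)]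
  else m \notin Z.

Lemma open_tripleC G Z a m b : open_triple G Z a m b = open_triple G Z b m a.
Proof. by rewrite /open_triple andbC. Qed.

Lemma open_triple_noncollider G Z a m b b' : b \notin G m -> b' \notin G m ->
  open_triple G Z a m b = open_triple G Z a m b'.
Proof. by move=> /negbTE bm /negbTE b'm; rewrite /open_triple bm b'm !andbF. Qed.

Lemma open_noncollider_notin G Z a m b : open_triple G Z a m b -> b \notin G m -> m \notin Z.
Proof. by rewrite /open_triple => + /negbTE bm; rewrite bm andbF. Qed.

Lemma open_collider_desc G Z a m b : open_triple G Z a m b -> a \in G m -> b \in G m ->
  [exists w, connect (edge G) m w && (w \in Z)].
Proof. by rewrite /open_triple => + am bm; rewrite am bm. Qed.

(* A trail is the whole sequence q of its nodes, endpoints included; [x0] is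
   only the default value of [nth]. *)
Definition open_trail x0 G Z q : Prop :=
  [/\ uniq q,
      forall i, i.+1 < size q -> adj G (nth x0 q i) (nth x0 q i.+1) &
      forall i, 0 < i -> i.+1 < size q ->
        open_triple G Z (nth x0 q i.-1) (nth x0 q i) (nth x0 q i.+1)].

Lemma open_trail_default x0 x1 G Z q : open_trail x0 G Z q -> open_trail x1 G Z q.
Proof.
case=> uq ad op; split=> // [i iq|i i0 iq].
  by rewrite !(set_nth_default x0) //; [apply: ad | lia].
by rewrite !(set_nth_default x0) //; [apply: op | lia | lia].
Qed.

Lemma open_trail_rev x0 G Z q : open_trail x0 G Z q -> open_trail x0 G Z (rev q).
Proof.
case=> uq ad op; split; first by rewrite rev_uniq.
  move=> i; rewrite size_rev => iq; rewrite !nth_rev 1?adjC; try lia.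
  have -> : (size q - i.+1 = (size q - i.+2).+1)%N by lia.
  by apply: ad; lia.
move=> i i0; rewrite size_rev => iq; rewrite !nth_rev; try lia.
have -> : (size q - i.-1.+1 = (size q - i.+1).+1)%N by lia.
have -> : (size q - i.+2 = (size q - i.+1).-1)%N by lia.
by rewrite open_tripleC; apply: op; lia.
Qed.

Definition dconn G a b Z := exists q,
  [/\ 0 < size q, nth a q 0 = a, last a q = b & open_trail a G Z q].

Lemma d_connectedE G a b Z : d_connected G a b Z <-> dconn G a b Z.
Proof.
split=> [[p [/and3P [pa /eqP pb up] op]]|[q [q0 qa qb [uq ad op]]]].
  exists (a :: p); split=> //; split=> // i ip.
  by move/pathP: pa => /(_ a i); apply.
case: q q0 qa qb uq ad op => // c p _ /= -> pb up ad op.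
exists p; split; first by apply/and3P; split=> //; [apply/(pathP a) | apply/eqP].
by move=> n n0 np; have := op n n0 np.
Qed.

Lemma dconn_sym G a b Z : dconn G a b Z -> dconn G b a Z.
Proof.
case=> q [+ + + t]; case: q t => // c p t _ /= ca pb; subst c.
exists (rev (a :: p)); split.
- by rewrite size_rev.
- by rewrite nth_rev // subn1 nth_last.
- by rewrite rev_cons last_rcons.
- exact: (open_trail_default b (open_trail_rev t)).
Qed.

Lemma dconn_adj G a b Z : a != b -> adj G a b -> dconn G a b Z.
Proof.
move=> ab adj_ab; exists [:: a; b]; split=> //; split=> //=.
- by rewrite inE andbT.
- by case=> [|[|i]] //= _; rewrite adjC.
- by case=> [|[|i]].
Qed.

Lemma dconn_triple G a c b Z : a != b -> a != c -> b != c ->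
  adj G a c -> adj G c b -> open_triple G Z a c b -> dconn G a b Z.
Proof.
move=> ab ac bc adj_ac adj_cb o; exists [:: a; c; b]; split=> //; split=> //=.
- by rewrite !inE negb_or ac ab /= eq_sym bc.
- by case=> [|[|[|i]]].
- by case=> [|[|[|i]]].
Qed.

End Trails.

Section TrailSurgery.
Variables (d : nat) (G1 G2 : graph d) (Z : {set 'I_d}) (x0 : 'I_d).
Hypothesis same_adj : adj G2 =2 adj G1.

Local Notation open2 q p := (open_triple G2 Z (nth x0 q p.-1) (nth x0 q p) (nth x0 q p.+1)).

Ltac if_lia := repeat match goal with
  |- context [if ?c then _ else _] =>
     first [ rewrite (@ifT _ c); [|lia] | rewrite (@ifN _ c); [|lia] ] end.

Lemma open_trail_excise q k l : open_trail x0 G1 Z q ->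
  0 < k <= l -> l < size q ->
  adj G2 (nth x0 q k.-1) (nth x0 q l) ->
  (forall p, 0 < p -> p.+1 < k -> open2 q p) ->
  (forall p, l < p -> p.+1 < size q -> open2 q p) ->
  (1 < k -> open_triple G2 Z (nth x0 q k.-2) (nth x0 q k.-1) (nth x0 q l)) ->
  (l.+1 < size q -> open_triple G2 Z (nth x0 q k.-1) (nth x0 q l) (nth x0 q l.+1)) ->
  open_trail x0 G2 Z (excise k l q).
Proof.
move=> [uq ad _] /andP [k0 kl] lq adj_kl op_lo op_hi op_k op_l.
have kls : k <= l <= size q by lia.
split; first exact: excise_uniq.
  move=> p; rewrite size_excise // => pq; rewrite !nth_excise //.
  case: (ltnP p.+1 k) => pk; first by if_lia; rewrite same_adj; apply: ad; lia.
  case: (ltnP p k) => pk'.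
    have -> : p = k.-1 by lia.
    by if_lia; have -> : (k.-1.+1 + (l - k) = l)%N by lia.
  if_lia; rewrite same_adj.
  have -> : (p.+1 + (l - k) = (p + (l - k)).+1)%N by lia.
  by apply: ad; lia.
move=> p p0; rewrite size_excise // => pq; rewrite !nth_excise //.
case: (ltnP p.+1 k) => pk; first by if_lia; apply: op_lo; lia.
case: (ltnP p k) => pk'.
  have -> : p = k.-1 by lia.
  if_lia; have -> : (k.-1.+1 + (l - k) = l)%N by lia.
  by apply: op_k; lia.
case: (leqP p k) => pk''.
  have -> : p = k by lia.
  if_lia; have -> : (k + (l - k) = l)%N by lia.
  have -> : (k.+1 + (l - k) = l.+1)%N by lia.
  by apply: op_l; lia.
if_lia; have -> : (p.-1 + (l - k) = (p + (l - k)).-1)%N by lia.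
have -> : (p.+1 + (l - k) = (p + (l - k)).+1)%N by lia.
by apply: op_hi; lia.
Qed.

Lemma open_trail_set_nth q i y : open_trail x0 G1 Z q -> y \notin q ->
  0 < i -> i.+1 < size q ->
  adj G2 (nth x0 q i.-1) y -> adj G2 y (nth x0 q i.+1) ->
  (forall p, 0 < p -> p.+1 < size q -> p != i.-1 -> p != i -> p != i.+1 -> open2 q p) ->
  (1 < i -> open_triple G2 Z (nth x0 q i.-2) (nth x0 q i.-1) y) ->
  open_triple G2 Z (nth x0 q i.-1) y (nth x0 q i.+1) ->
  (i.+2 < size q -> open_triple G2 Z y (nth x0 q i.+1) (nth x0 q i.+2)) ->
  open_trail x0 G2 Z (set_nth x0 q i y).
Proof.
move=> [uq ad _] yq i0 iq adj_l adj_r op_far op_l op_i op_r.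
have sz : size (set_nth x0 q i y) = size q by rewrite size_set_nth; lia.
split.
- rewrite set_nthE ifT; last lia.
  rewrite -(cat1s y) uniq_catCA cat1s cons_uniq excise_uniq // andbT.
  by apply: contra yq; rewrite mem_cat => /orP [/mem_take|/mem_drop].
- move=> p; rewrite sz => pq; rewrite !nth_set_nth /=.
  case: (eqVneq p i) => [->|pi]; first by have -> : (i.+1 == i) = false by lia.
  case: (eqVneq p.+1 i) => [pi'|_]; first by subst i.
  by rewrite same_adj; exact: ad.
move=> p p0; rewrite sz => pq; rewrite !nth_set_nth /=.
case: (eqVneq p i) => [->|pi].
  have -> : (i.-1 == i) = false by lia.
  by have -> : (i.+1 == i) = false by lia.
case: (eqVneq p.+1 i) => [pi'|pi'].
  subst i; have -> : (p.-1 == p.+1) = false by lia.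
  by apply: op_l; lia.
case: (eqVneq p.-1 i) => [pi''|pi''].
  subst i; have -> : p = p.-1.+1 by lia.
  by apply: op_r; lia.
by apply: op_far => //; apply/eqP; lia.
Qed.

End TrailSurgery.

(** * Covered edge reversals *)

Section CoveredReversal.
Variable d : nat.

Definition rev_edge (G : graph d) (x y : 'I_d) : graph d :=
  [ffun i => if i == x then y |: G x else if i == y then G y :\ x else G i].

Definition covered (G : graph d) (x y : 'I_d) := x \in G y /\ G y = x |: G x.

Variables (G : graph d) (x y : 'I_d).
Hypothesis acG : acyclic G.
Hypothesis cov : covered G x y.
Local Notation G' := (rev_edge G x y).
Implicit Types (Z : {set 'I_d}) (q : seq 'I_d).

Lemma covered_edge : x \in G y. Proof. by case: cov. Qed.
Lemma covered_neq : x != y.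
Proof. by apply: contraTneq covered_edge => ->; exact: acyclic_irrefl. Qed.
Lemma covered_asym : y \notin G x. Proof. exact: acyclic_asym covered_edge. Qed.

Lemma covered_parentE a : a != x -> (a \in G y) = (a \in G x).
Proof. by move=> ax; case: cov => _ ->; rewrite in_setU1 (negbTE ax). Qed.

Lemma rev_edge_x : G' x = y |: G x. Proof. by rewrite ffunE eqxx. Qed.

Lemma rev_edge_y : G' y = G x.
Proof.
rewrite ffunE eq_sym (negbTE covered_neq) eqxx; case: cov => _ ->.
by rewrite setU1K // acyclic_irrefl.
Qed.

Lemma rev_edge_other m : m != x -> m != y -> G' m = G m.
Proof. by move=> /negbTE mx /negbTE my; rewrite ffunE mx my. Qed.

Lemma rev_edge_parentE a b : ~~ ((a == x) && (b == y)) -> ~~ ((a == y) && (b == x)) ->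
  (a \in G' b) = (a \in G b).
Proof.
move=> not_xy not_yx; case: (eqVneq b x) => [bx|bx].
  subst b; rewrite rev_edge_x in_setU1.
  by have /negbTE -> : a != y by apply: contraNneq not_yx => ->; rewrite !eqxx.
case: (eqVneq b y) => [by'|by']; last by rewrite rev_edge_other.
subst b; rewrite rev_edge_y covered_parentE //.
by apply: contraNneq not_xy => ->; rewrite !eqxx.
Qed.

Lemma adj_rev_edge : adj G' =2 adj G.
Proof.
move=> a b; rewrite /adj.
have [/andP [/eqP -> /eqP ->]|not_xy] := boolP ((a == x) && (b == y)).
  by rewrite rev_edge_x setU11 covered_edge orbT.
have [/andP [/eqP -> /eqP ->]|not_yx] := boolP ((a == y) && (b == x)).
  by rewrite rev_edge_x setU11 covered_edge orbT.
by rewrite !rev_edge_parentE //; rewrite andbC.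
Qed.

Lemma connect_rev_edge_split a z : connect (edge G) a z ->
  connect (edge G') a z \/ (connect (edge G') a x /\ connect (edge G') y z).
Proof.
move=> /connectP [p pp ->] {z}.
elim: p a pp => [|c p IH] a /=; first by left; rewrite connect0.
move=> /andP [ac pc]; have := IH c pc.
have [/andP [/eqP -> /eqP ->]|not_xy] := boolP ((a == x) && (c == y)).
  by case=> [yz|[_ yz]]; right; rewrite connect0.
have ac' : connect (edge G') a c.
  apply: connect1; rewrite /edge rev_edge_parentE //.
  by apply: contraTN ac => /andP [/eqP -> /eqP ->]; exact: covered_asym.
by case=> [cz|[cx yz]]; [left | right]; rewrite ?(connect_trans ac').
Qed.

Lemma connect_rev_edge a z : a != x -> connect (edge G) a z -> connect (edge G') a z.
Proof.
move=> ax /connect_rev_edge_split [//|[ax' yz]].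
have [p ap px] := connect_last_edge ax' ax.
move: px; rewrite /edge rev_edge_x in_setU1 => /orP [/eqP py|pGx].
  by rewrite py in ap; exact: connect_trans ap yz.
have py : edge G' p y by rewrite /edge rev_edge_y.
exact: connect_trans (connect_trans ap (connect1 py)) yz.
Qed.

Lemma connect_rev_edge_y z : connect (edge G) x z -> connect (edge G') y z.
Proof.
move/connect_rev_edge_split => [xz|[_ //]].
by apply: connect_trans xz; apply: connect1; rewrite /edge rev_edge_x setU11.
Qed.

Lemma open_triple_rev_edge Z a m b : open_triple G Z a m b -> m != x ->
  (m == y) ==> (a != x) && (b != x) -> open_triple G' Z a m b.
Proof.
move=> o mx hy.
have parE c : (m == y) ==> (c != x) -> (c \in G' m) = (c \in G m).
  move=> hc; apply: rev_edge_parentE; last by rewrite (negbTE mx) andbF.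
  case: (eqVneq m y) hc => [_ /= cx|]; last by rewrite andbF.
  by rewrite andbT.
rewrite /open_triple !parE; try by case: (m == y) hy => //= /andP [].
move: o; rewrite /open_triple; case: ifP => // _ /existsP [w /andP [mw wZ]].
by apply/existsP; exists w; rewrite wZ connect_rev_edge.
Qed.

Lemma open_triple_rev_edge_x Z a b : open_triple G Z a x b -> a != y -> b != y ->
  ~~ ((a \in G x) && (b \in G x)) -> open_triple G' Z a x b.
Proof.
move=> + /negbTE ay /negbTE by' /negbTE nc.
by rewrite /open_triple rev_edge_x !in_setU1 ay by' /= nc.
Qed.

Lemma open_triple_rev_edge_parent Z a u : u \in G x ->
  open_triple G Z a u x -> open_triple G' Z a u y.
Proof.
move=> ux o.
have ux' : u != x by apply: contraTneq ux => ->; exact: acyclic_irrefl.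
have uy' : u != y by apply: contraTneq ux => ->; exact: covered_asym.
have uy : u \in G y by rewrite covered_parentE.
rewrite (@open_triple_noncollider _ G' Z a u y x).
- by apply: open_triple_rev_edge => //; rewrite (negbTE uy').
- by rewrite rev_edge_other //; exact: acyclic_asym uy.
- by rewrite rev_edge_other //; exact: acyclic_asym ux.
Qed.

Lemma open_triple_rev_edge_y Z u w : open_triple G Z x y w -> u \in G x -> w != x ->
  open_triple G' Z u y w.
Proof.
move=> o ux wx; rewrite /open_triple rev_edge_y ux -(covered_parentE wx) /=.
move: o; rewrite /open_triple covered_edge /=; case: ifP => // _ /existsP [z /andP [yz zZ]].
by apply/existsP; exists z; rewrite zZ connect_rev_edge // eq_sym covered_neq.
Qed.

Lemma open_triple_rev_edge_x_noncollider Z u b c : open_triple G Z u x b ->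
  b \notin G x -> u \notin G x -> u != y -> open_triple G' Z u x c.
Proof.
move=> o bx ux uy; have := open_noncollider_notin o bx.
by rewrite /open_triple rev_edge_x in_setU1 (negbTE uy) (negbTE ux).
Qed.

Lemma open_triple_rev_edge_xy Z w : open_triple G Z x y w -> w \notin G y ->
  open_triple G' Z x y w.
Proof.
move=> o wy; have := open_noncollider_notin o wy.
by rewrite /open_triple rev_edge_y (negbTE (acyclic_irrefl x acG)).
Qed.

Lemma open_triple_rev_edge_collider_y Z u b c :
  [exists w, connect (edge G) x w && (w \in Z)] ->
  open_triple G Z b y c -> c != x -> u \in G x -> open_triple G' Z u y c.
Proof.
move=> /existsP [z /andP [xz zZ]] o cx ux.
rewrite /open_triple rev_edge_y ux /= -(covered_parentE cx).
case: ifP => cy; first by apply/existsP; exists z; rewrite zZ connect_rev_edge_y.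
by apply: (open_noncollider_notin o); rewrite cy.
Qed.

Section ReversedTrails.
Variables (Z : {set 'I_d}) (x0 : 'I_d).
Local Notation open_at' q p :=
  (open_triple G' Z (nth x0 q p.-1) (nth x0 q p) (nth x0 q p.+1)).

Lemma open_trail_rev_edge_same q : open_trail x0 G Z q ->
  (forall p, p.+1 < size q ->
     ~~ ((nth x0 q p == x) && (nth x0 q p.+1 == y)) &&
     ~~ ((nth x0 q p == y) && (nth x0 q p.+1 == x))) ->
  (forall p, 0 < p -> p.+1 < size q -> nth x0 q p = x ->
     ~~ ((nth x0 q p.-1 \in G x) && (nth x0 q p.+1 \in G x))) ->
  open_trail x0 G' Z q.
Proof.
move=> [uq ad op] no_xy no_collider; split=> // [p pq|p p0 pq].
  by rewrite adj_rev_edge; apply: ad.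
have /andP [/negP xy1 /negP yx1] := no_xy p.-1 ltac:(lia).
have /andP [/negP xy2 /negP yx2] := no_xy p pq.
rewrite (_ : p.-1.+1 = p) in xy1 yx1; last lia.
case: (eqVneq (nth x0 q p) x) => [px|px].
  have := op p p0 pq; rewrite px => opx.
  apply: open_triple_rev_edge_x => //.
  - by apply/eqP => qy; apply: yx1; rewrite qy px !eqxx.
  - by apply/eqP => qy; apply: xy2; rewrite qy px !eqxx.
  - exact: no_collider.
apply: open_triple_rev_edge => //; first exact: op.
apply/implyP=> /eqP py; apply/andP; split; apply/eqP => qx.
  by apply: xy1; rewrite qx py !eqxx.
by apply: yx2; rewrite qx py !eqxx.
Qed.

Lemma open_trail_rev_edge_away q p : open_trail x0 G Z q -> 0 < p -> p.+1 < size q ->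
  nth x0 q p != x -> nth x0 q p != y -> open_at' q p.
Proof.
case=> _ _ op p0 pq px py; apply: open_triple_rev_edge => //; first exact: op.
by rewrite (negbTE py).
Qed.

Lemma open_trail_rev_edge_drop_x q i : open_trail x0 G Z q -> 0 < i -> i.+1 < size q ->
  nth x0 q i = x -> nth x0 q i.+1 = y -> nth x0 q i.-1 \in G x ->
  open_trail x0 G' Z (excise i i.+1 q).
Proof.
move=> t i0 iq qx qy ux; have [uq _ op] := t; have iq' := ltnW iq.
have away p : 0 < p -> p.+1 < size q -> p != i -> p != i.+1 -> open_at' q p.
  move=> p0 pq pi pi1; apply: open_trail_rev_edge_away => //.
    by rewrite -qx nth_uniq // ltnW.
  by rewrite -qy nth_uniq // ltnW.
apply: (open_trail_excise adj_rev_edge t); try lia.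
- by rewrite qy /adj rev_edge_y ux.
- by move=> p p0 pi; apply: away => //; lia.
- by move=> p ip pq; apply: away => //; lia.
- move=> i1; rewrite qy; apply: open_triple_rev_edge_parent => //.
  by have := op i.-1 ltac:(lia) ltac:(lia); rewrite (_ : i.-1.+1 = i) ?qx //; lia.
- move=> i2; rewrite qy; apply: open_triple_rev_edge_y => //.
    by rewrite -qx -qy; apply: op; lia.
  by rewrite -qx nth_uniq //; lia.
Qed.

Lemma open_trail_rev_edge_drop_y q i : open_trail x0 G Z q -> i.+2 < size q ->
  nth x0 q i = x -> nth x0 q i.+1 = y -> nth x0 q i.+2 \in G y ->
  (0 < i -> nth x0 q i.-1 \notin G x) ->
  open_trail x0 G' Z (excise i.+1 i.+2 q).
Proof.
move=> t iq qx qy wy u_notin; have [uq _ op] := t.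
have [iq0 iq1] : i < size q /\ i.+1 < size q by split; lia.
have px p : p < size q -> (nth x0 q p == x) = (p == i) by move=> pq; rewrite -qx nth_uniq.
have py p : p < size q -> (nth x0 q p == y) = (p == i.+1) by move=> pq; rewrite -qy nth_uniq.
have away p : 0 < p -> p.+1 < size q -> p != i -> p != i.+1 -> open_at' q p.
  move=> p0 pq pi pi1; apply: open_trail_rev_edge_away => //.
    by rewrite px ?(negbTE pi) // ltnW.
  by rewrite py ?(negbTE pi1) // ltnW.
have wx : nth x0 q i.+2 != x by rewrite px; lia.
have wGx : nth x0 q i.+2 \in G x by rewrite -covered_parentE.
apply: (open_trail_excise adj_rev_edge t); try lia.
- by rewrite /= qx /adj rev_edge_x in_setU1 wGx orbT orbT.
- by move=> p p0 pi; apply: away => //; lia.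
- by move=> p ip pq; apply: away => //; lia.
- move=> i0; rewrite /= qx; apply: (@open_triple_rev_edge_x_noncollider _ _ y).
  + by have := op i i0 ltac:(lia); rewrite qx qy.
  + exact: covered_asym.
  + exact: u_notin.
  + by rewrite py; lia.
- move=> i3; rewrite /= qx.
  have := away i.+2 ltac:(lia) ltac:(lia) ltac:(apply/eqP; lia) ltac:(apply/eqP; lia).
  have w_other : nth x0 q i.+2 != y by rewrite py; lia.
  rewrite /= qy open_tripleC => o; rewrite open_tripleC.
  rewrite (@open_triple_noncollider _ G' Z _ _ x y) // rev_edge_other //.
    exact: acyclic_asym wGx.
  exact: acyclic_asym wy.
Qed.

Lemma open_trail_rev_edge_consecutive q i : open_trail x0 G Z q -> i.+1 < size q ->
  nth x0 q i = x -> nth x0 q i.+1 = y ->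
  exists2 q', same_ends x0 q q' & open_trail x0 G' Z q'.
Proof.
move=> t iq qx qy; have [uq ad op] := t.
have [iq0 iq1] : i.-1 < size q /\ i < size q by split; lia.
have [/andP [i0 ux]|no_u] := boolP ((0 < i) && (nth x0 q i.-1 \in G x)).
  exists (excise i i.+1 q); first by apply: excise_same_ends; lia.
  exact: open_trail_rev_edge_drop_x.
have u_notin : 0 < i -> nth x0 q i.-1 \notin G x.
  by move=> i0; apply: contraNN no_u => ->; rewrite i0.
have [/andP [i2 wy]|no_w] := boolP ((i.+2 < size q) && (nth x0 q i.+2 \in G y)).
  exists (excise i.+1 i.+2 q); first by apply: excise_same_ends; lia.
  exact: open_trail_rev_edge_drop_y.
exists q; first by split=> //; lia.
split=> // [p pq|p p0 pq]; first by rewrite adj_rev_edge; apply: ad.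
have [pi|pi] := eqVneq p i.
  subst p; rewrite qx; apply: (@open_triple_rev_edge_x_noncollider _ _ y).
  - by have := op i p0 iq; rewrite qx qy.
  - exact: covered_asym.
  - exact: u_notin.
  - by rewrite -qy nth_uniq //; lia.
have [pi1|pi1] := eqVneq p i.+1.
  subst p; rewrite /= qx qy; apply: open_triple_rev_edge_xy.
    by have := op i.+1 p0 pq; rewrite /= qx qy.
  by apply: contraNN no_w => ->; rewrite pq.
have pq' : p < size q by lia.
by apply: open_trail_rev_edge_away => //; [rewrite -qx | rewrite -qy]; rewrite nth_uniq //; lia.
Qed.

Lemma open_trail_rev_edge_collider_y q i j : open_trail x0 G Z q ->
  0 < i -> i.+1 < j < size q -> nth x0 q i = x -> nth x0 q j = y ->
  nth x0 q i.-1 \in G x -> nth x0 q i.+1 \in G x ->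
  exists2 q', same_ends x0 q q' & open_trail x0 G' Z q'.
Proof.
move=> t i0 /andP [ij jq] qx qy ux wx; have [uq ad op] := t.
have iq : i < size q by lia.
have px p : p < size q -> (nth x0 q p == x) = (p == i).
  by move=> pq; rewrite -qx nth_uniq.
have op' p : 0 < p -> p.+1 < size q -> p != i -> p != j -> open_at' q p.
  move=> p0 pq pi pj; apply: open_trail_rev_edge_away => //.
    by rewrite px ?(negbTE pi) // ltnW.
  by rewrite -qy nth_uniq ?(negbTE pj) // ltnW.
have x_open : [exists w, connect (edge G) x w && (w \in Z)].
  by have := op i i0 ltac:(lia); rewrite qx => /open_collider_desc; apply.
exists (excise i j q); first by apply: excise_same_ends; lia.
apply: (open_trail_excise adj_rev_edge t); try lia.
- by rewrite qy /adj rev_edge_y ux.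
- by move=> p p0 pi; apply: op' => //; apply/eqP; lia.
- by move=> p jp pq; apply: op' => //; apply/eqP; lia.
- move=> i1; rewrite qy; apply: open_triple_rev_edge_parent => //.
  by have := op i.-1 ltac:(lia) ltac:(lia); rewrite (_ : i.-1.+1 = i) ?qx //; lia.
- move=> j1; rewrite qy; apply: (@open_triple_rev_edge_collider_y _ _ (nth x0 q j.-1)) => //.
    by have := op j ltac:(lia) j1; rewrite qy.
  by rewrite px; lia.
Qed.

Lemma open_trail_rev_edge_collider q i : open_trail x0 G Z q -> y \notin q ->
  0 < i -> i.+1 < size q -> nth x0 q i = x ->
  nth x0 q i.-1 \in G x -> nth x0 q i.+1 \in G x ->
  exists2 q', same_ends x0 q q' & open_trail x0 G' Z q'.
Proof.
move=> t yq i0 iq qx ux wx; have [uq ad op] := t.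
have px p : p < size q -> (nth x0 q p == x) = (p == i).
  by move=> pq; rewrite -qx nth_uniq // ltnW.
have ny p : p < size q -> (nth x0 q p == y) = false.
  by move=> pq; apply: contraNF yq => /eqP <-; exact: mem_nth.
have /existsP [z /andP [xz zZ]] : [exists w, connect (edge G) x w && (w \in Z)].
  by have := op i i0 iq; rewrite qx => /open_collider_desc; apply.
exists (set_nth x0 q i y); first exact: set_nth_same_ends.
apply: (open_trail_set_nth adj_rev_edge t) => //.
- by rewrite /adj rev_edge_y ux.
- by rewrite /adj rev_edge_y wx orbT.
- move=> p p0 pq _ pi _; apply: open_trail_rev_edge_away => //.
    by rewrite px ?(negbTE pi) // ltnW.
  by rewrite ny // ltnW.
- move=> i1; apply: open_triple_rev_edge_parent => //.
  by have := op i.-1 ltac:(lia) ltac:(lia); rewrite (_ : i.-1.+1 = i) ?qx //; lia.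
- rewrite /open_triple rev_edge_y ux wx /=.
  by apply/existsP; exists z; rewrite zZ connect_rev_edge_y.
- move=> i2; rewrite open_tripleC; apply: open_triple_rev_edge_parent => //.
  by have := op i.+1 ltac:(lia) i2; rewrite /= qx open_tripleC.
Qed.

(* Only the neighbourhood of x and y on the trail can break: when y follows x
   one of them may have to be dropped, a collider at x is bypassed through y
   (the parents of x are the parents of y in G'), and otherwise the trail stays
   open. *)
Lemma open_trail_rev_edge q : open_trail x0 G Z q -> 0 < size q ->
  (x \in q -> y \in q -> index x q < index y q) ->
  exists2 q', same_ends x0 q q' & open_trail x0 G' Z q'.
Proof.
move=> t q0 xy_order; have [uq ad op] := t.
have keep_q : (forall p, 0 < p -> p.+1 < size q -> nth x0 q p = x ->
     ~~ ((nth x0 q p.-1 \in G x) && (nth x0 q p.+1 \in G x))) ->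
  (forall p, p.+1 < size q ->
     ~~ ((nth x0 q p == x) && (nth x0 q p.+1 == y)) &&
     ~~ ((nth x0 q p == y) && (nth x0 q p.+1 == x))) ->
  exists2 q', same_ends x0 q q' & open_trail x0 G' Z q'.
  by move=> no_col no_xy; exists q; [split | apply: open_trail_rev_edge_same].
have notin_nth c p : c \notin q -> p < size q -> (nth x0 q p == c) = false.
  by move=> cq pq; apply: contraNF cq => /eqP <-; exact: mem_nth.
have [xq|xq] := boolP (x \in q); last first.
  apply: keep_q => [p _ pq px|p pq]; first by move: xq; rewrite -px mem_nth // ltnW.
  by rewrite !(notin_nth x) ?andbF //; lia.
set i := index x q; have iq : i < size q by rewrite index_mem.
have qx : nth x0 q i = x by exact: nth_index.
have px p : p < size q -> (nth x0 q p == x) = (p == i) by move=> pq; rewrite -qx nth_uniq.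
have [/and4P [i0 i1 ux wx]|no_col] :=
  boolP [&& 0 < i, i.+1 < size q, nth x0 q i.-1 \in G x & nth x0 q i.+1 \in G x].
  have [yq|yq] := boolP (y \in q); last exact: open_trail_rev_edge_collider yq i0 i1 qx ux wx.
  have ij := xy_order xq yq; set j := index y q in ij.
  have jq : j < size q by rewrite index_mem.
  have qy : nth x0 q j = y by exact: nth_index.
  have [ji|ji] := eqVneq j i.+1; first by move: wx; rewrite -ji qy (negbTE covered_asym).
  have ij' : i.+1 < j < size q by rewrite jq andbT; lia.
  exact: (open_trail_rev_edge_collider_y t i0 ij' qx qy ux wx).
have {}no_col p : 0 < p -> p.+1 < size q -> nth x0 q p = x ->
    ~~ ((nth x0 q p.-1 \in G x) && (nth x0 q p.+1 \in G x)).
  move=> p0 pq /eqP; rewrite px => [/eqP pi|]; last exact: ltnW.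
  subst p.
  by apply: contra no_col => /andP [-> ->]; rewrite p0 pq.
have [yq|yq] := boolP (y \in q); last first.
  by apply: keep_q => // p pq; rewrite !(notin_nth y) ?andbF //; lia.
have ij := xy_order xq yq; set j := index y q in ij.
have jq : j < size q by rewrite index_mem.
have qy : nth x0 q j = y by exact: nth_index.
have py p : p < size q -> (nth x0 q p == y) = (p == j) by move=> pq; rewrite -qy nth_uniq.
have [ji|ji] := eqVneq j i.+1.
  by apply: (open_trail_rev_edge_consecutive t (i := i)); rewrite -?ji //; lia.
by apply: keep_q => // p pq; rewrite !px ?py //; lia.
Qed.

Lemma same_ends_dconn a q q' : same_ends a q q' -> open_trail a G' Z q' -> 0 < size q ->
  dconn G' (nth a q 0) (last a q) Z.
Proof.
move=> [q'0 q'_head q'_last] t' q0; exists q'; split=> //.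
- by rewrite (set_nth_default a) // q'_head.
- rewrite -nth_last (set_nth_default a); last lia.
  by rewrite q'_last nth_last.
- exact: open_trail_default t'.
Qed.

End ReversedTrails.

Lemma dconn_rev_edge a b Z : dconn G a b Z -> dconn G' a b Z.
Proof.
case=> q [q0 qa qb t]; have [uq _ _] := t.
have [/andP [/andP [xq yq] yx]|xy_order] :=
  boolP ((x \in q) && (y \in q) && (index y q < index x q)).
  have [q' same t'] : exists2 q', same_ends a (rev q) q' & open_trail a G' Z q'.
    apply: open_trail_rev_edge (open_trail_rev t) _ _; first by rewrite size_rev.
    have := index_mem x q; rewrite xq => xi.
    by rewrite !mem_rev => _ _; rewrite !index_rev_uniq //; lia.
  apply: dconn_sym; have := same_ends_dconn same t'; rewrite size_rev => /(_ q0).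
  rewrite nth_rev // subn1 nth_last qb.
  suff -> : last a (rev q) = a by [].
  by case: q q0 qa {t uq xq yq yx same qb} => // c s _ /= ->; rewrite rev_cons last_rcons.
have [q' same t'] : exists2 q', same_ends a q q' & open_trail a G' Z q'.
  apply: open_trail_rev_edge t q0 _ => xq yq.
  move: xy_order; rewrite xq yq /= -leqNgt leq_eqVlt => /orP [/eqP xy|//].
  by move: covered_neq; rewrite -(nth_index a xq) xy nth_index ?eqxx.
by have := same_ends_dconn same t' q0; rewrite qa qb.
Qed.

(* Ranks by number of ancestors in G, with x and y squeezed between: y just
   below x, and both below every child of x. *)
Lemma rev_edge_acyclic : acyclic G'.
Proof.
pose a v := #|ancestors G v|.
pose r v := if v == x then (a x).*2.+1 else if v == y then (a x).*2 else (a v).*2.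
have lt i j : j \in G i -> a j < a i by exact: card_ancestors_parent.
have yx : (y == x) = false by rewrite eq_sym (negbTE covered_neq).
have notxy j : j \in G x -> (j == x) = false /\ (j == y) = false.
  move=> jx; split; apply: negbTE; apply: contraTneq jx => ->.
    exact: acyclic_irrefl.
  exact: covered_asym.
apply: (@rank_acyclic _ _ r) => i j; rewrite /r.
case: (eqVneq i x) => [->|ix].
  rewrite rev_edge_x in_setU1 => /orP [/eqP ->|jx]; first by rewrite yx eqxx.
  by have [-> ->] := notxy j jx; have := lt _ _ jx; lia.
case: (eqVneq i y) => [->|iy].
  by rewrite rev_edge_y => jx; have [-> ->] := notxy j jx; have := lt _ _ jx; lia.
rewrite rev_edge_other // => ji; have := lt _ _ ji.
case: (eqVneq j x) => [->|jx]; first lia.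
case: (eqVneq j y) => [->|jy]; last lia.
by have := lt _ _ covered_edge; lia.
Qed.

Lemma rev_edge_covered : covered G' y x.
Proof. by rewrite /covered rev_edge_x rev_edge_y setU11. Qed.

Lemma rev_edgeK : rev_edge G' y x = G.
Proof.
apply/ffunP => i; rewrite [LHS]ffunE.
case: (eqVneq i y) => [->|iy]; first by rewrite rev_edge_y; case: cov => _ ->.
case: (eqVneq i x) => [->|ix]; first by rewrite rev_edge_x setU1K // covered_asym.
by rewrite rev_edge_other.
Qed.

Lemma score_rev_edge (R : realType) (A : finType) (P : {ffun assign d A -> R}) :
  score (Hfam P) G' = score (Hfam P) G.
Proof.
rewrite /score; congr (- _)%R.
rewrite (bigD1 x) //= (bigD1 y) 1?eq_sym ?covered_neq //=.
rewrite [RHS](bigD1 x) //= [in RHS](bigD1 y) 1?eq_sym ?covered_neq //=.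
rewrite !addrA; congr (_ + _)%R; last first.
  by apply: eq_bigr => i /andP [ix iy]; rewrite rev_edge_other.
rewrite rev_edge_x rev_edge_y; case: cov => _ ->.
by rewrite /Hfam /= setUCA; lra.
Qed.

End CoveredReversal.

Lemma markov_rev_edge d (G : graph d) x y : acyclic G -> covered G x y ->
  markov_eq G (rev_edge G x y).
Proof.
move=> acG cov a b Z _ _ _; rewrite /d_separated !d_connectedE.
split=> sepG conn; apply: sepG; last exact: dconn_rev_edge conn.
have := dconn_rev_edge (rev_edge_acyclic acG cov) (rev_edge_covered acG cov) conn.
by rewrite rev_edgeK.
Qed.

(** * Markov equivalence *)

Section Chickering.
Variable d : nat.
Implicit Types (G : graph d) (a b c : 'I_d).

Definition vstruct G a c b := [&& a \in G c, b \in G c, a != b & ~~ adj G a b].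

Definition same_vstructs G1 G2 := forall a c b, vstruct G1 a c b = vstruct G2 a c b.

Definition reversed_edges G1 G2 : {set 'I_d * 'I_d} :=
  [set e | (e.1 \in G1 e.2) && (e.2 \in G2 e.1)].

Lemma vstruct_parentsU1 G (S : {set 'I_d}) u a b : (forall v, v \in S -> adj G u v) ->
  [&& a \in u |: S, b \in u |: S, a != b & ~~ adj G a b] =
  [&& a \in S, b \in S, a != b & ~~ adj G a b].
Proof.
move=> adj_u; rewrite !in_setU1.
have [-> | au] /= := eqVneq a u.
  have [-> | bu] /= := eqVneq b u; first by rewrite !andbF.
  by case: (boolP (b \in S)) => bS; rewrite ?andbF //= (adj_u _ bS) !andbF.
have [-> | bu] //= := eqVneq b u.
by case: (boolP (a \in S)) => aS; rewrite ?andbF //= adjC (adj_u _ aS) !andbF.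
Qed.

Lemma vstruct_rev_edge G x y : acyclic G -> covered G x y ->
  same_vstructs (rev_edge G x y) G.
Proof.
move=> acG cov a c b; rewrite /vstruct (adj_rev_edge acG cov).
case: (eqVneq c x) => [->|cx].
  rewrite rev_edge_x vstruct_parentsU1 // => v vx.
  rewrite /adj (covered_parentE cov) ?vx ?orbT //.
  by apply: contraTneq vx => ->; exact: acyclic_irrefl.
case: (eqVneq c y) => [->|cy]; last by rewrite rev_edge_other.
rewrite (rev_edge_y acG cov); case: (cov) => _ ->.
by rewrite vstruct_parentsU1 // => v vx; rewrite /adj vx orbT.
Qed.

Lemma reversed_edges_rev_edge G G2 x y : acyclic G -> acyclic G2 -> covered G x y ->
  (x, y) \in reversed_edges G G2 ->
  reversed_edges (rev_edge G x y) G2 = reversed_edges G G2 :\ (x, y).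
Proof.
move=> acG ac2 cov; rewrite inE /= => /andP [_ yx2].
apply/setP => [[a b]]; rewrite !inE /= xpair_eqE.
have [/andP [/eqP -> /eqP ->]|not_xy] := boolP ((a == x) && (b == y)).
  by rewrite (rev_edge_y acG cov) (negbTE (acyclic_irrefl x acG)).
have [/andP [/eqP -> /eqP ->]|not_yx] := boolP ((a == y) && (b == x)).
  by rewrite (negbTE (acyclic_asym ac2 yx2)) (negbTE (covered_asym acG cov)) !andbF.
by rewrite (rev_edge_parentE acG cov).
Qed.

Lemma reversed_edges0 G1 G2 : adj G1 =2 adj G2 -> reversed_edges G1 G2 = set0 -> G1 = G2.
Proof.
move=> same_adj rev0; apply/ffunP => b; apply/setP => a.
have no_rev u v : (u \in G1 v) && (v \in G2 u) = false.
  by apply/negbTE/negP => uv; have := in_set0 (u, v); rewrite -rev0 inE uv.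
apply/idP/idP => ab.
  have := same_adj a b; rewrite /adj ab /= => /esym /orP [//|ba].
  by have := no_rev a b; rewrite ab ba.
have := same_adj a b; rewrite /adj ab /= => /orP [//|ba].
by have := no_rev b a; rewrite ab ba.
Qed.

Section MinimalReversedEdge.
Variables (G1 G2 : graph d) (x y : 'I_d).
Hypotheses (ac1 : acyclic G1) (ac2 : acyclic G2).
Hypotheses (same_adj : adj G1 =2 adj G2) (same_vs : same_vstructs G1 G2).
Hypotheses (xy1 : x \in G1 y) (yx2 : y \in G2 x).
Hypothesis y_min : forall u v, (u, v) \in reversed_edges G1 G2 -> connect (edge G1) v y -> v = y.
Hypothesis x_min : forall u, (u, y) \in reversed_edges G1 G2 -> connect (edge G1) x u -> u = x.

Lemma minimal_reversed_parent_y a : a != x -> a \in G1 y -> a \in G1 x.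
Proof.
move=> ax ay.
have : adj G1 a x.
  apply/negPn/negP => nadj.
  have : vstruct G1 a y x by rewrite /vstruct ay xy1 ax nadj.
  by rewrite same_vs /vstruct (negbTE (acyclic_asym ac2 yx2)) andbF.
case/orP => // xa.
have [ya2|ya2] := boolP (y \in G2 a).
  have ay_rev : (a, y) \in reversed_edges G1 G2 by rewrite inE /= ay ya2.
  by move: ax; rewrite (x_min ay_rev (connect1 xa)) eqxx.
have ay2 : a \in G2 y by have := same_adj a y; rewrite /adj ay (negbTE ya2) orbF.
have [xa2|xa2] := boolP (x \in G2 a).
  have := ac2 ay2.
  by rewrite (connect_trans (connect1 (yx2 : edge G2 y x)) (connect1 (xa2 : edge G2 x a))).
have ax2 : a \in G2 x by have := same_adj a x; rewrite /adj xa orbT (negbTE xa2) orbF.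
have xa_rev : (x, a) \in reversed_edges G1 G2 by rewrite inE /= xa ax2.
have ya := y_min xa_rev (connect1 ay).
by move: ay; rewrite ya (negbTE (acyclic_irrefl y ac1)).
Qed.

Lemma minimal_reversed_parent_x a : a \in G1 x -> a \in G1 y.
Proof.
move=> ax.
have ay : a != y by apply: contraTneq ax => ->; exact: acyclic_asym xy1.
have ax2 : a \in G2 x.
  have := same_adj a x; rewrite /adj ax /= => /esym /orP [//|xa2].
  have ax_rev : (a, x) \in reversed_edges G1 G2 by rewrite inE /= ax xa2.
  have xy := y_min ax_rev (connect1 xy1).
  by move: xy1; rewrite xy (negbTE (acyclic_irrefl y ac1)).
case: (boolP (adj G1 a y)) => [/orP [//|ya]|nadj].
  have := ac1 xy1.
  by rewrite (connect_trans (connect1 (ya : edge G1 y a)) (connect1 (ax : edge G1 a x))).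
have : vstruct G2 a x y by rewrite /vstruct ax2 yx2 ay -same_adj nadj.
by rewrite -same_vs /vstruct (negbTE (acyclic_asym ac1 xy1)) andbF.
Qed.

Lemma minimal_reversed_covered : covered G1 x y.
Proof.
split=> //; apply/setP => a; rewrite in_setU1.
have [->|ax] /= := eqVneq a x; first exact: xy1.
by apply/idP/idP; [exact: minimal_reversed_parent_y | exact: minimal_reversed_parent_x].
Qed.

End MinimalReversedEdge.

(* Chickering's choice: among the reversed edges x -> y take y with fewest
   ancestors, then x with fewest descendants. *)
Lemma covered_reversed_edge G1 G2 : acyclic G1 -> acyclic G2 ->
  adj G1 =2 adj G2 -> same_vstructs G1 G2 -> reversed_edges G1 G2 != set0 ->
  exists x y, (x, y) \in reversed_edges G1 G2 /\ covered G1 x y.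
Proof.
move=> ac1 ac2 same_adj same_vs /set0Pn [[u0 v0] uv0].
pose Y := [set v | [exists u, (u, v) \in reversed_edges G1 G2]].
have v0Y : v0 \in Y by rewrite inE; apply/existsP; exists u0.
have [y yY ymin] : exists2 y, y \in Y &
    forall v, v \in Y -> #|ancestors G1 y| <= #|ancestors G1 v|.
  by case: (arg_minnP (fun v => #|ancestors G1 v|) v0Y) => y; exists y.
pose X := [set u | (u, y) \in reversed_edges G1 G2].
have [x0 x0X] : exists x0, x0 \in X.
  by move: yY; rewrite inE => /existsP [u uy]; exists u; rewrite inE.
have [x xX xmin] : exists2 x, x \in X &
    forall u, u \in X -> #|descendants G1 x| <= #|descendants G1 u|.
  by case: (arg_minnP (fun u => #|descendants G1 u|) x0X) => x; exists x.
move: (xX); rewrite inE => xy; exists x, y; split=> //.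
move: xX; rewrite !inE /= => /andP [xy1 yx2].
apply: (minimal_reversed_covered ac1 ac2 same_adj same_vs xy1 yx2) => [u v uv vy|u uy xu].
  apply/eqP; apply/negPn/negP => nv.
  have vY : v \in Y by rewrite inE; apply/existsP; exists u.
  by have := card_ancestors_lt ac1 vy nv; have := ymin v vY; lia.
apply/eqP; apply/negPn/negP; rewrite eq_sym => xu'.
have uX : u \in X by rewrite inE.
by have := card_descendants_lt ac1 xu xu'; have := xmin u uX; lia.
Qed.

(* Chickering (1995): DAGs with the same skeleton and v-structures are linked by
   a sequence of covered edge reversals. *)
Lemma covered_reversal_ind (Q : graph d -> Prop) G1 G2 : acyclic G1 -> acyclic G2 ->
  adj G1 =2 adj G2 -> same_vstructs G1 G2 -> Q G1 ->
  (forall K x y, acyclic K -> covered K x y -> adj K =2 adj G2 -> Q K -> Q (rev_edge K x y)) ->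
  Q G2.
Proof.
move=> ac1 ac2 same_adj same_vs QG1 Qrev.
elim: {G1} #|reversed_edges G1 G2| {-2}G1 (leqnn #|reversed_edges G1 G2|) ac1 same_adj same_vs QG1
  => [|n IH] K cardK acK same_adj same_vs QK.
  suff -> : G2 = K by [].
  by apply/esym/reversed_edges0 => //; apply/eqP; rewrite -cards_eq0; lia.
have [rev0|rev0] := eqVneq (reversed_edges K G2) set0.
  by rewrite -(reversed_edges0 same_adj rev0).
have [x [y [xy cov]]] := covered_reversed_edge acK ac2 same_adj same_vs rev0.
apply: (IH (rev_edge K x y)).
- rewrite reversed_edges_rev_edge //.
  by rewrite (cardsD1 (x, y)) xy in cardK.
- exact: rev_edge_acyclic.
- by move=> a b; rewrite (adj_rev_edge acK cov).
- by move=> a c b; rewrite vstruct_rev_edge.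
- exact: Qrev.
Qed.

End Chickering.

Section MarkovEquivalence.
Variable d : nat.
Implicit Types (G : graph d) (a b c : 'I_d) (Z : {set 'I_d}).

(* An open trail from a to the set of parents of b must, read backwards from b,
   leave b through a child of b and then keep going down (a parent on it would
   be blocked, a collider would need a descendant of b among its parents); so a
   would be a descendant of b. *)
Lemma dsep_parents G a b : acyclic G -> a != b -> ~~ adj G a b ->
  ~~ connect (edge G) b a -> ~ dconn G a b (G b).
Proof.
move=> acG ab nadj nba [q [q0 qa qb [uq ad op]]].
set m := (size q).-1.
have qm : nth a q m = b by rewrite /m nth_last.
have m2 : 1 < m.
  case: (ltnP 1 m) => // m1; have [m0|m_1] : m = 0 \/ m = 1 by lia.
    by move: ab; rewrite -qa -qm m0 eqxx.
  by have := ad 0 ltac:(rewrite /m in m_1; lia); rewrite qa -m_1 qm (negbTE nadj).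
have down k : 0 < k <= m ->
    connect (edge G) b (nth a q (m - k)) /\ nth a q (m - k).+1 \in G (nth a q (m - k)).
  elim: k => [//|k IH] /andP [_ km].
  have [->|k0] := eqVneq k 0.
    have m1 : (m - 1).+1 = m by lia.
    have := ad (m - 1) ltac:(rewrite /m; lia); rewrite m1 qm => /orP [qb'|bq].
      have := op (m - 1) ltac:(lia) ltac:(rewrite /m; lia); rewrite m1 qm => o.
      by have := open_noncollider_notin o (acyclic_asym acG qb'); rewrite qb'.
    by split=> //; exact: connect1.
  have [bp pG] := IH ltac:(lia); set p := (m - k)%N in bp pG.
  have -> : (m - k.+1).+1 = p by rewrite /p; lia.
  have -> : (m - k.+1) = p.-1 by rewrite /p; lia.
  have o := op p ltac:(rewrite /p; lia) ltac:(rewrite /p /m; lia).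
  have [col|ncol] := boolP (nth a q p.-1 \in G (nth a q p)).
    have /existsP [w /andP [pw wb]] := open_collider_desc o col pG.
    by have := acG b w wb; rewrite (connect_trans bp pw).
  have := ad p.-1 ltac:(rewrite /p /m; lia).
  rewrite (_ : p.-1.+1 = p); last by rewrite /p; lia.
  rewrite /adj (negbTE ncol) /= => pq.
  by split=> //; apply: connect_trans bp (connect1 pq).
have [ba _] := down m ltac:(lia).
by rewrite subnn qa in ba; rewrite ba in nba.
Qed.

Lemma nonadj_dseparated G a b : acyclic G -> a != b -> ~~ adj G a b ->
  exists Z, [/\ a \notin Z, b \notin Z & ~ dconn G a b Z].
Proof.
move=> acG ab nadj; move: (nadj); rewrite /adj negb_or => /andP [aGb bGa].
have [ba|nba] := boolP (connect (edge G) b a); last first.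
  by exists (G b); split=> //; [exact: acyclic_irrefl | exact: dsep_parents].
have nab : ~~ connect (edge G) a b.
  by apply: contraNN ab => ab'; rewrite (acyclic_connect_anti acG ab' ba).
exists (G a); split=> //; first exact: acyclic_irrefl.
move=> /dconn_sym; apply: dsep_parents => //; first by rewrite eq_sym.
by rewrite adjC.
Qed.

Lemma markov_eq_sym G1 G2 : markov_eq G1 G2 -> markov_eq G2 G1.
Proof. by move=> m a b Z ab aZ bZ; apply: iff_sym; exact: m. Qed.

Lemma markov_eq_trans G1 G2 G3 : markov_eq G1 G2 -> markov_eq G2 G3 -> markov_eq G1 G3.
Proof. by move=> m12 m23 a b Z ab aZ bZ; apply: iff_trans (m12 _ _ _ _ _ _) (m23 _ _ _ _ _ _). Qed.

Lemma markov_dconn G1 G2 a b Z : markov_eq G1 G2 -> a != b -> a \notin Z -> b \notin Z ->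
  dconn G1 a b Z -> dconn G2 a b Z.
Proof.
move=> m ab aZ bZ conn1; apply: contrapT => conn2.
have sep2 : d_separated G2 a b Z by rewrite /d_separated d_connectedE.
by apply: (proj2 (m a b Z ab aZ bZ) sep2); rewrite d_connectedE.
Qed.

Lemma markov_adj G1 G2 : markov_eq G1 G2 -> acyclic G1 -> acyclic G2 -> adj G1 =2 adj G2.
Proof.
have half G G' a b : markov_eq G G' -> acyclic G' -> a != b -> adj G a b -> adj G' a b.
  move=> m ac' ab adj_ab; apply/negPn/negP => nadj.
  have [Z [aZ bZ sep]] := nonadj_dseparated ac' ab nadj.
  by apply: sep; apply: (markov_dconn m) => //; exact: dconn_adj.
move=> m ac1 ac2 a b; have [->|ab] := eqVneq a b.
  by rewrite /adj !orbb (negbTE (acyclic_irrefl b ac1)) (negbTE (acyclic_irrefl b ac2)).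
apply/idP/idP; first exact: half.
by apply: half => //; exact: markov_eq_sym.
Qed.

Lemma markov_vstruct G1 G2 : markov_eq G1 G2 -> acyclic G1 -> acyclic G2 ->
  same_vstructs G1 G2.
Proof.
have half G G' a c b : markov_eq G G' -> acyclic G -> acyclic G' ->
    vstruct G a c b -> vstruct G' a c b.
  move=> m ac ac' /and4P [ac_ bc ab nadj].
  have same_adj := markov_adj m ac ac'.
  have a_c : a != c by apply: contraTneq ac_ => ->; exact: acyclic_irrefl.
  have b_c : b != c by apply: contraTneq bc => ->; exact: acyclic_irrefl.
  have adj_ac : adj G' a c by rewrite -same_adj /adj ac_.
  have adj_cb : adj G' c b by rewrite -same_adj /adj bc orbT.
  have nadj' : ~~ adj G' a b by rewrite -same_adj.
  have [Z [aZ bZ sep]] := nonadj_dseparated ac' ab nadj'.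
  have [cZ|cZ] := boolP (c \in Z).
    exfalso; apply: sep; apply: (markov_dconn m) => //.
    apply: (@dconn_triple _ _ a c b) => //; rewrite ?same_adj //.
    by rewrite /open_triple ac_ bc; apply/existsP; exists c; rewrite connect0 cZ.
  have [/andP [ac'' bc'']|ncol] := boolP ((a \in G' c) && (b \in G' c)).
    by rewrite /vstruct ac'' bc'' ab nadj'.
  exfalso; apply: sep; apply: (@dconn_triple _ _ a c b) => //.
  by rewrite /open_triple (negbTE ncol).
move=> m ac1 ac2 a c b; apply/idP/idP; first exact: half.
by apply: half => //; exact: markov_eq_sym.
Qed.

Lemma markov_score (R : realType) (A : finType) (P : {ffun assign d A -> R}) G1 G2 :
  markov_eq G1 G2 -> acyclic G1 -> acyclic G2 -> score (Hfam P) G1 = score (Hfam P) G2.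
Proof.
move=> m ac1 ac2.
apply: (@covered_reversal_ind _ (fun K => score (Hfam P) G1 = score (Hfam P) K) G1 G2) => //.
- exact: markov_adj.
- exact: markov_vstruct.
- by move=> K x y acK covK _ ->; rewrite score_rev_edge.
Qed.

End MarkovEquivalence.

Section Glue.
Variables (d : nat) (V : {set 'I_d}).
Implicit Types (G K H : graph d).

Definition glue K H : graph d := [ffun i => if i \in V then K i else H i].
Definition restrict G : graph d := [ffun i => if i \in V then G i else set0].

Lemma glue_in K H i : i \in V -> glue K H i = K i.
Proof. by move=> iV; rewrite ffunE iV. Qed.

Lemma glue_out K H i : i \notin V -> glue K H i = H i.
Proof. by move=> iV; rewrite ffunE (negbTE iV). Qed.

Lemma glue_acyclic K H : acyclic K -> acyclic H ->
  (forall i, i \in V -> K i \subset V) -> acyclic (glue K H).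
Proof.
move=> acK acH closedK.
have into_V a b : connect (edge (glue K H)) a b -> b \in V ->
    a \in V /\ connect (edge K) a b.
  move=> /connectP [p pp ->] {b}.
  elim: p a pp => [|c p IH] a /=; first by split; rewrite ?connect0.
  move=> /andP [ac pc] /(IH c pc) [cV cb]; move: ac; rewrite /edge glue_in // => ac.
  by split; [exact: (subsetP (closedK c cV)) | exact: connect_trans (connect1 ac) cb].
have from_out a b : connect (edge (glue K H)) a b -> a \notin V -> connect (edge H) a b.
  move=> /connectP [p pp ->] {b}.
  elim: p a pp => [|c p IH] a /=; first by rewrite connect0.
  move=> /andP [ac pc] aV; have [cV|cV] := boolP (c \in V).
    by move: ac; rewrite /edge glue_in // => /(subsetP (closedK c cV)); rewrite (negbTE aV).
  by move: ac; rewrite /edge glue_out // => ac; exact: connect_trans (connect1 ac) (IH c pc cV).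
move=> i j; have [iV|iV] := boolP (i \in V).
  rewrite glue_in // => ji; apply/negP => ij.
  have [_ ij'] := into_V _ _ ij (subsetP (closedK i iV) _ ji).
  by have := acK _ _ ji; rewrite ij'.
rewrite glue_out // => ji; apply/negP => ij.
by have := acH _ _ ji; rewrite from_out.
Qed.

Lemma restrict_acyclic G : acyclic G -> acyclic (restrict G).
Proof. by apply: sub_acyclic => i; rewrite ffunE; case: ifP => _; rewrite ?sub0set. Qed.

Lemma rev_edge_glue K H x y : x \in V -> y \in V ->
  rev_edge (glue K H) x y = glue (rev_edge K x y) H.
Proof.
move=> xV yV; apply/ffunP => i; rewrite [LHS]ffunE.
have [->|ix] := eqVneq i x; first by rewrite !glue_in // ffunE eqxx.
have [iy|iy] := eqVneq i y; first by subst i; rewrite !glue_in // ffunE (negbTE ix) eqxx.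
have [iV|iV] := boolP (i \in V); last by rewrite !glue_out.
by rewrite !glue_in // ffunE (negbTE ix) (negbTE iy).
Qed.

Lemma glue_markov K1 K2 H : acyclic K1 -> acyclic K2 -> acyclic H -> markov_eq K1 K2 ->
  (forall a i, a \in K2 i -> a \in V /\ i \in V) ->
  markov_eq (glue K1 H) (glue K2 H).
Proof.
move=> ac1 ac2 acH m inV.
apply: (@covered_reversal_ind _ (fun K => markov_eq (glue K1 H) (glue K H)) K1 K2) => //.
- exact: markov_adj.
- exact: markov_vstruct.
move=> K x y acK covK same_adj mK.
have closedK i : i \in V -> K i \subset V.
  move=> iV; apply/subsetP => a ai; have : adj K2 a i by rewrite -same_adj /adj ai.
  by case/orP => /inV [].
have [xV yV] : x \in V /\ y \in V.
  have : adj K2 x y by rewrite -same_adj /adj (covered_edge covK).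
  by case/orP => /inV [].
have covg : covered (glue K H) x y.
  by rewrite /covered !glue_in //; case: covK.
rewrite -rev_edge_glue //; apply: markov_eq_trans mK _.
by apply: markov_rev_edge covg; exact: glue_acyclic.
Qed.

End Glue.

(** * The algorithm *)

Section Scores.
Variables (R : realType) (d k : nat).
Local Open Scope ring_scope.
Implicit Types (G : graph d) (B : {set graph d}) (F : graph d -> R).

Lemma setmax_ge B F G : G \in B -> F G <= setmax B F.
Proof.
rewrite /setmax; case: pickP => [G0 _|B0]; last by rewrite B0.
by move=> GB; rewrite (bigD1 G) //= le_max lexx.
Qed.

Lemma setmax_attained B F : B != set0 -> exists2 G, G \in B & setmax B F = F G.
Proof.
rewrite /setmax; case: pickP => [G0 G0B _|B0]; last by case/set0Pn => G; rewrite B0.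
apply: (big_ind (fun v => exists2 G, G \in B & v = F G)) => [|u v [G1 G1B ->] [G2 G2B ->]|G GB].
- by exists G0.
- by case: (leP (F G1) (F G2)) => _; [exists G2 | exists G1].
- by exists G.
Qed.

Lemma in_fams G (f : fam d) : (f \in fams G) = (f.2 == G f.1).
Proof.
apply/imsetP/eqP => [[i _ -> //]|f2].
by exists f.1 => //; case: f f2 => i S /= ->.
Qed.

Lemma UfamsP B f : reflect (exists2 G, G \in B & f \in fams G) (f \in Ufams B).
Proof. exact: bigcupP. Qed.

Lemma in_Gsub (Acc : {set fam d}) G : (G \in Gsub k Acc) <-> (DAGk k G /\ Acc \subset fams G).
Proof. by rewrite inE asboolE. Qed.

Lemma Gsub_DAGk (Acc : {set fam d}) G : G \in Gsub k Acc -> DAGk k G.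
Proof. by case/in_Gsub. Qed.

Lemma in_EC G G' : (G' \in EC k G) <-> (DAGk k G' /\ markov_eq G G').
Proof. by rewrite inE asboolE. Qed.

Lemma DAGk_family G i : DAGk k G -> is_family k (i, G i).
Proof. by case=> deg acG; rewrite /is_family /= acyclic_irrefl // deg. Qed.

(* Two graphs that agree on V differ in score only through the families of the
   other d - |V| children, each estimated within e / 2. *)
Lemma score_diff_estimate (Hh H : fam d -> R) (V : {set 'I_d}) (e : R) G1 G2 :
  DAGk k G1 -> DAGk k G2 -> (forall v, v \in V -> G1 v = G2 v) ->
  (forall f, is_family k f -> f.1 \notin V -> `|Hh f - H f| <= e / 2) ->
  `|(score Hh G1 - score Hh G2) - (score H G1 - score H G2)| <= (d - #|V|)%:R * e.
Proof.
move=> D1 D2 agree est.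
have -> : (score Hh G1 - score Hh G2) - (score H G1 - score H G2) =
    \sum_(i : 'I_d) ((Hh (i, G2 i) - H (i, G2 i)) - (Hh (i, G1 i) - H (i, G1 i))).
  by rewrite /score !sumrB; lra.
rewrite (bigID (fun i => i \in V)) /= big1 ?add0r; last by move=> i iV; rewrite agree // subrr.
apply: le_trans (ler_norm_sum _ _ _) _.
apply: le_trans (ler_sum _ (fun i iV => _ : _ <= e)) _.
  move=> i iV; apply: le_trans (ler_normB _ _) _; rewrite [e]splitr.
  by apply: lerD; apply: est => //; exact: DAGk_family.
rewrite sumr_const.
have -> : #|[pred i : 'I_d | i \notin V]| = (d - #|V|)%N.
  have -> : #|[pred i : 'I_d | i \notin V]| = #|[predC V]| by apply: eq_card => i; rewrite !inE.
  by have := cardC V; rewrite card_ord; lia.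
by rewrite mulr_natl.
Qed.

End Scores.

Section Run.
Variables (R : realType) (d k : nat) (A : finType) (P : {ffun assign d A -> R}).
Local Open Scope ring_scope.
Local Notation H := (Hfam P).
Local Notation S := (score H).
Implicit Types (s : state d) (G : graph d) (Hh : fam d -> R).

Definition opt_score := setmax [set G : graph d | `[< DAGk k G >] ] S.

Lemma score_le_opt G : DAGk k G -> S G <= opt_score.
Proof. by move=> DG; apply: setmax_ge; rewrite inE asboolE. Qed.

Definition consistent_state s :=
  [/\ forall f, f \in s.1 -> f.1 \in s.2,
      forall v, v \in s.2 -> exists2 f, f \in s.1 & f.1 = v,
      #|s.1| = #|s.2| &
      exists2 G, G \in Gsub k s.1 & S G = opt_score].

Lemma consistent_state0 : consistent_state (set0, set0).
Proof.
split=> /= [f|v||]; rewrite ?inE ?cards0 //.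
have : [set G : graph d | `[< DAGk k G >] ] != set0.
  apply/set0Pn; exists [ffun=> set0]; rewrite inE asboolE; split.
    by move=> i; rewrite ffunE cards0.
  by apply: (@rank_acyclic _ _ (fun=> 0%N)) => i j; rewrite ffunE inE.
case/(setmax_attained S) => G; rewrite inE asboolE => DG GS.
by exists G; [apply/in_Gsub; split; rewrite ?sub0set | rewrite /opt_score GS].
Qed.

Lemma Gsub_agree s G1 G2 : consistent_state s -> G1 \in Gsub k s.1 -> G2 \in Gsub k s.1 ->
  forall v, v \in s.2 -> G1 v = G2 v.
Proof.
move=> [_ childs _ _] /in_Gsub [_ sub1] /in_Gsub [_ sub2] v /childs [f fA <-].
by have := subsetP sub1 _ fA; have := subsetP sub2 _ fA; rewrite !in_fams => /eqP <- /eqP <-.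
Qed.

Section Estimates.
Variables (Hh : fam d -> R) (Vt : {set 'I_d}) (e : R).
Hypothesis est : forall f, is_family k f -> f.1 \notin Vt -> `|Hh f - H f| <= e / 2.

Lemma score_diff_state s G1 G2 : consistent_state s -> Vt \subset s.2 ->
  G1 \in Gsub k s.1 -> G2 \in Gsub k s.1 ->
  `|(score Hh G1 - score Hh G2) - (S G1 - S G2)| <= (d - #|s.2|)%:R * e.
Proof.
move=> cs sub G1s G2s.
apply: score_diff_estimate (Gsub_DAGk G1s) (Gsub_DAGk G2s) (Gsub_agree cs G1s G2s) _ => f ff fV.
by apply: est => //; apply: contra fV; exact: (subsetP sub).
Qed.

(* The EC of an optimal graph of G_j is within theta of the estimated best one,
   so an accepted family lies in one of its members, which is optimal too. *)
Lemma accept_step_consistent s s' : consistent_state s -> Vt \subset s.2 ->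
  accept_step k Hh e s s' -> consistent_state s' /\ Vt \subset s'.2.
Proof.
move=> cs sub [Gh [f [[Ghs Ghmax] [fU [ff fV] inL] ->]]].
have [inV childs card [Gs Gss GsS]] := cs.
have DGs := Gsub_DAGk Gss; have DGh := Gsub_DAGk Ghs.
have [G' G'E fG'] : exists2 G', G' \in EC k Gs :&: Gsub k s.1 & f \in fams G'.
  apply/UfamsP; apply: inL => //.
    by apply/set0Pn; exists Gs; rewrite inE Gss andbT; apply/in_EC.
  have [G1 G1E ->] : exists2 G1, G1 \in EC k Gh :&: Gsub k s.1 &
      setmax (EC k Gh :&: Gsub k s.1) (score Hh) = score Hh G1.
    by apply: setmax_attained; apply/set0Pn; case/UfamsP: fU => G GE _; exists G.
  have G1Gh : score Hh G1 <= score Hh Gh by apply: Ghmax; move: G1E; rewrite inE => /andP [].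
  have GsE : score Hh Gs <= setmax (EC k Gs :&: Gsub k s.1) (score Hh).
    by apply: setmax_ge; rewrite inE Gss andbT; apply/in_EC.
  have /ler_normlP [_ diff] := score_diff_state cs sub Ghs Gss.
  have := score_le_opt DGh; rewrite -GsS; lra.
move: G'E; rewrite inE => /andP [/in_EC [DG' GsG'] /in_Gsub [_ subG']].
have fA : f \notin s.1 by apply: contra fV; exact: inV.
split; last by apply: (subset_trans sub); apply/subsetP => v vV; rewrite in_setU1 vV orbT.
split=> /=.
- by move=> g; rewrite !in_setU1 => /orP [/eqP -> | /inV ->]; rewrite ?eqxx ?orbT.
- move=> v; rewrite in_setU1 => /orP [/eqP -> | /childs [g gA gv]].
    by exists f; rewrite ?setU11.
  by exists g; rewrite ?in_setU1 ?gA ?orbT.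
- by rewrite !cardsU1 fA fV card.
- exists G'; last by rewrite -GsS (markov_score P GsG') //; [case: DGs | case: DG'].
  apply/in_Gsub; split=> //; apply/subsetP => g; rewrite in_setU1 => /orP [/eqP -> //|].
  exact: (subsetP subG').
Qed.

Lemma round_exec_consistent s s' : consistent_state s -> Vt \subset s.2 ->
  round_exec k Hh e s s' ->
  [/\ consistent_state s', Vt \subset s'.2 & noaccept_step k Hh e s'].
Proof.
move=> cs sub r; elim: r cs sub => [s0 na|s0 s1 s2 acc _ IH] cs sub; first by split.
by have [cs1 sub1] := accept_step_consistent cs sub acc; exact: IH.
Qed.

End Estimates.
End Run.

Section Stability.
Variables (R : realType) (d k : nat) (A : finType) (P : {ffun assign d A -> R}).
Variables (gamma : R) (Vs : {set 'I_d}).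
Hypothesis stab : stable k P gamma Vs.
Local Open Scope ring_scope.
Local Notation H := (Hfam P).
Local Notation S := (score H).
Implicit Types (G K : graph d) (s : state d).

Lemma DAGk_glue K G : DAGk k K -> DAGk k G -> (forall i, i \in Vs -> K i \subset Vs) ->
  DAGk k (glue Vs K G).
Proof.
move=> [degK acK] [degG acG] closedK; split; last exact: glue_acyclic.
by move=> i; rewrite ffunE; case: ifP.
Qed.

Lemma glue_Gsub (Acc : {set fam d}) G1 G2 : G1 \in Gsub k Acc -> G2 \in Gsub k Acc ->
  DAGk k (glue Vs G1 G2) -> glue Vs G1 G2 \in Gsub k Acc.
Proof.
move=> /in_Gsub [_ sub1] /in_Gsub [_ sub2] DG; apply/in_Gsub; split=> //.
apply/subsetP => f fA; have := subsetP sub1 _ fA; have := subsetP sub2 _ fA.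
by rewrite !in_fams ffunE; case: ifP.
Qed.

Lemma score_glue K G : S (glue Vs K G) = S G + scoreV H Vs K - scoreV H Vs G.
Proof.
rewrite /score /scoreV (bigID (mem Vs)) [in RHS](bigID (mem Vs)) /=.
rewrite (eq_bigr (fun i => H (i, K i))) => [|i iV]; last by rewrite glue_in.
rewrite [X in - (_ + X)](eq_bigr (fun i => H (i, G i))) => [|i iV]; last by rewrite glue_out.
lra.
Qed.

Lemma near_optimal_closed G : DAGk k G -> opt_score k P - gamma <= S G ->
  forall v, v \in Vs -> G v \subset Vs.
Proof. exact: stab.1. Qed.

(* Near-optimal DAGs are optimal on V: grafting the optimal V-part Gopt onto one
   of them would otherwise gain more than gamma over the optimum. *)
Lemma near_optimal_restrict_markov G1 G2 : DAGk k G1 -> DAGk k G2 ->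
  opt_score k P - gamma <= S G1 -> opt_score k P - gamma <= S G2 ->
  markov_eq (restrict Vs G1) (restrict Vs G2).
Proof.
have [_ [Gopt [[DO closedO] [_ gap]]]] := stab.
suff opt G : DAGk k G -> opt_score k P - gamma <= S G -> markov_eq Gopt (restrict Vs G).
  move=> DG1 DG2 near1 near2.
  exact: markov_eq_trans (markov_eq_sym (opt _ DG1 near1)) (opt _ DG2 near2).
move=> DG nearG; apply: contrapT => nm.
have DR : DAG_over k Vs (restrict Vs G).
  split; first split.
  - by move=> i; rewrite ffunE; case: ifP => _; [case: DG | rewrite cards0].
  - by apply: restrict_acyclic; case: DG.
  move=> i; rewrite !ffunE; split=> [iV|/negbTE -> //].
  by rewrite iV; exact: near_optimal_closed.
have := gap _ DR nm.
have -> : scoreV H Vs (restrict Vs G) = scoreV H Vs G.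
  by rewrite /scoreV; congr (- _); apply: eq_bigr => i iV; rewrite ffunE iV.
have DG' : DAGk k (glue Vs Gopt G) by apply: DAGk_glue => // i iV; case: (closedO i) => /(_ iV).
by have := score_le_opt P DG'; rewrite score_glue; lra.
Qed.

Lemma near_optimal_glue_markov G1 G2 : DAGk k G1 -> DAGk k G2 ->
  opt_score k P - gamma <= S G1 -> opt_score k P - gamma <= S G2 ->
  markov_eq G2 (glue Vs G1 G2).
Proof.
move=> DG1 DG2 near1 near2.
have [[_ ac1] [_ ac2]] := (DG1, DG2).
have m := near_optimal_restrict_markov DG2 DG1 near2 near1.
have := @glue_markov d Vs (restrict Vs G2) (restrict Vs G1) G2
  (restrict_acyclic ac2) (restrict_acyclic ac1) ac2 m.
have glue_restrict G : glue Vs (restrict Vs G) G2 = glue Vs G G2.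
  by apply/ffunP => i; rewrite !ffunE; case: (i \in Vs).
rewrite !glue_restrict (_ : glue Vs G2 G2 = G2); last by apply/ffunP => i; rewrite ffunE; case: ifP.
apply=> a i; rewrite ffunE; case: ifP => iV; last by rewrite inE.
by move=> ai; split=> //; exact: (subsetP (near_optimal_closed DG1 near1 iV)).
Qed.

(* If V were not yet covered, the family of a missing vertex in the estimated
   best graph would be acceptable: every EC within theta of the estimated best
   contains near-optimal graphs, which can take over that family on V. *)
Lemma noaccept_step_covers (Hh : fam d -> R) (Vt : {set 'I_d}) (e : R) s :
  consistent_state k P s -> Vt \subset s.2 ->
  (forall f, is_family k f -> f.1 \notin Vt -> `|Hh f - H f| <= e / 2) ->
  0 <= e -> (d - #|s.2|)%:R * e <= gamma / 2 ->
  noaccept_step k Hh e s -> Vs \subset s.2.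
Proof.
move=> cs sub est e0 small [Gh [[Ghs Ghmax] nacc]].
have [_ _ _ [Gs Gss GsS]] := cs.
have DGh := Gsub_DAGk Ghs.
have GhE : Gh \in EC k Gh :&: Gsub k s.1 by rewrite inE Ghs andbT; apply/in_EC.
have /ler_normlP [_ diff_h] := score_diff_state est cs sub Ghs Gss.
have GsGh := Ghmax _ Gss.
have th0 : 0 <= (d - #|s.2|)%:R * e by rewrite mulr_ge0.
have nearGh : opt_score k P - gamma <= S Gh by lra.
apply/subsetP => v vVs; apply: contrapT => /negP vV.
apply: (nacc (v, Gh v)); split => [||G DG EG close].
- by apply/UfamsP; exists Gh; rewrite ?in_fams.
- by split=> //; exact: DAGk_family.
have [GE GEE GEmax] := setmax_attained (score Hh) EG.
have GhGE := setmax_ge (score Hh) GhE.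
move: GEE; rewrite inE => /andP [/in_EC [DGE GGE] GEs].
have /ler_normlP [_ diff_E] := score_diff_state est cs sub GEs Gss.
rewrite GEmax in close.
have nearGE : opt_score k P - gamma <= S GE by lra.
have DGl : DAGk k (glue Vs Gh GE) by apply: DAGk_glue => //; exact: near_optimal_closed.
apply/UfamsP; exists (glue Vs Gh GE); last by rewrite in_fams /= glue_in.
rewrite inE glue_Gsub // andbT; apply/in_EC; split=> //.
exact: markov_eq_trans GGE (near_optimal_glue_markov DGh DGE nearGh nearGE).
Qed.

End Stability.

Section Schedule.
Variable R : realType.
Local Open Scope ring_scope.

Lemma eps_r_gt0 (eps1 : R) t : 0 < eps1 -> 0 < eps_r eps1 t.
Proof. by move=> e10; rewrite /eps_r divr_gt0 // exprn_gt0. Qed.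

(* eps / d < eps1 / 2^(t-1) means 2^t < 2 d eps1 / eps. *)
Lemma round_le_Tmax (d : nat) (eps eps1 : R) t : (0 < d)%N -> 0 < eps -> 0 < eps1 ->
  (1 <= t)%N -> eps / d%:R < eps_r eps1 t -> t%:Z <= Tmax d eps eps1.
Proof.
move=> d0 e0 e10 t1; rewrite /eps_r.
have dpos : (0 : R) < d%:R by rewrite ltr0n.
have ppos : (0 : R) < 2 ^+ t.-1 by rewrite exprn_gt0.
rewrite ltr_pdivrMr // mulrAC ltr_pdivlMr // => lt.
set X := 2 * d%:R * eps1 / eps.
have l2 : (0 : R) < ln 2 by rewrite ln_gt0 //; lra.
have pow_lt : (2 : R) ^+ t < X.
  rewrite /X ltr_pdivlMr // (_ : t = t.-1.+1); last lia.
  by rewrite exprS; lra.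
have Xpos : 0 < X by rewrite /X divr_gt0 ?mulr_gt0.
have : ln ((2 : R) ^+ t) < ln X by rewrite ltr_ln // posrE exprn_gt0.
rewrite lnXn // => lnX.
have tX : (t%:R : R) < ln X / ln 2 by rewrite ltr_pdivlMr // mulr_natl.
by rewrite /Tmax -(ler_int R); apply: le_trans (ceil_ge _); apply: ltW.
Qed.

Lemma dim_gt0_of_eps_r_le (d : nat) (gamma eps1 : R) t : 0 < eps1 ->
  eps_r eps1 t <= gamma / (2 * d%:R) -> (0 < d)%N.
Proof.
move=> e10; case: posnP => // ->; rewrite mulr0 invr0 mulr0.
by rewrite leNgt eps_r_gt0.
Qed.

Lemma theta_le_half_gamma (d m : nat) (gamma eps1 : R) t : 0 < eps1 ->
  eps_r eps1 t <= gamma / (2 * d%:R) -> (d - m)%:R * eps_r eps1 t <= gamma / 2.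
Proof.
move=> e10 small; have d0 := dim_gt0_of_eps_r_le e10 small.
apply: le_trans (_ : d%:R * eps_r eps1 t <= _).
  by apply: ler_wpM2r; [exact/ltW/eps_r_gt0 | rewrite ler_nat leq_subr].
have d_ne0 : (d%:R : R) != 0 by rewrite pnatr_eq0 -lt0n.
have -> : gamma / 2 = d%:R * (gamma / (2 * d%:R)) by field.
by rewrite ler_pM2l ?ltr0n.
Qed.

End Schedule.

Section Rounds.
Variables (R : realType) (d k : nat) (A : finType) (P : {ffun assign d A -> R}).
Local Open Scope ring_scope.

Lemma run_consistent (Hh : nat -> fam d -> R) (et : nat -> R) (st : nat -> state d) t0 :
  st 1%N = (set0, set0) ->
  (forall t, (1 <= t <= t0)%N -> round_exec k (Hh t) (et t) (st t) (st t.+1)) ->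
  (forall t, (1 <= t <= t0)%N -> forall f, is_family k f -> f.1 \notin (st t).2 ->
     `|Hh t f - Hfam P f| <= et t / 2) ->
  forall t, (1 <= t <= t0.+1)%N -> consistent_state k P (st t).
Proof.
move=> st1 runs est; elim=> [//|[_ _|t IH /andP [_ tt0]]].
  by rewrite st1; exact: consistent_state0.
have tt : (1 <= t.+1 <= t0)%N by lia.
by have [] := round_exec_consistent (est _ tt) (IH ltac:(lia)) (subxx _) (runs _ tt).
Qed.

Lemma run_unfinished (st : nat -> state d) t0 : (0 < d)%N -> st 1%N = (set0, set0) ->
  (forall t, (1 <= t < t0)%N -> #|(st t.+1).2| != d) ->
  forall t, (1 <= t <= t0)%N -> (#|(st t).2| < d)%N.
Proof.
move=> d0 st1 not_done t /andP [t1 tt0].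
have le_d : (#|(st t).2| <= d)%N by rewrite -[X in (_ <= X)%N](card_ord d) max_card.
case: (eqVneq t 1%N) => [->|t_1]; first by rewrite st1 cards0.
by have := not_done t.-1 ltac:(lia); rewrite prednK //; lia.
Qed.

Lemma run_estimates (Hh : nat -> fam d -> R) (st : nat -> state d) t0 (eps eps1 : R) :
  (0 < d)%N -> 0 < eps -> 0 < eps1 ->
  (forall t, (1 <= t <= t0)%N -> (#|(st t).2| < d)%N) ->
  (forall t, (1 <= t <= t0)%N -> eps / (d - #|(st t).2|)%:R < eps_r eps1 t) ->
  (forall t, (1 <= t)%N -> t%:Z <= Tmax d eps eps1 -> (t <= t0)%N ->
     forall f, is_family k f -> f.1 \notin (st t).2 ->
       `|Hh t f - Hfam P f| <= eps_r eps1 t / 2) ->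
  forall t, (1 <= t <= t0)%N -> forall f, is_family k f -> f.1 \notin (st t).2 ->
    `|Hh t f - Hfam P f| <= eps_r eps1 t / 2.
Proof.
move=> d0 e0 e10 unfinished round_eps event t tt.
apply: event; try lia; apply: round_le_Tmax => //; first lia.
apply: le_lt_trans (round_eps t tt); rewrite ler_pdivlMr ?ltr0n ?subn_gt0 ?unfinished //.
by rewrite mulrAC ler_pdivrMr ?ltr0n // ler_pM2l // ler_nat leq_subr.
Qed.

End Rounds.

Local Open Scope ring_scope.

(* [st t] is the state (A, 𝒱) at the start of round t and [Hh t] holds the
   estimates of round t. *)
Theorem lemma6 (R : realType) (d k : nat) (A : finType)
    (P : {ffun (assign d A) -> R}) (gamma : R) (Vs : {set 'I_d})
    (eps eps1 : R) (Hh : nat -> fam d -> R) (st : nat -> state d) (t0 : nat) :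
  (0 < k)%N -> is_pmf P -> 0 < gamma -> 0 < eps -> 0 < eps1 ->
  stable k P gamma Vs ->
  (* t0 is the first round with eps_t <= gamma/(2d) *)
  (1 <= t0)%N -> eps_r eps1 t0 <= gamma / (2 * d%:R) ->
  (forall t, (1 <= t < t0)%N -> gamma / (2 * d%:R) < eps_r eps1 t) ->
  (* the run up to the end of round t0 *)
  st 1%N = (set0, set0) ->
  (forall t, (1 <= t <= t0)%N ->
     eps / (d - #|(st t).2|)%:R < eps_r eps1 t /\
     round_exec k (Hh t) (eps_r eps1 t) (st t) (st t.+1)) ->
  (forall t, (1 <= t < t0)%N -> #|(st t.+1).2| != d) ->
  (* the event E *)
  (forall t, (1 <= t)%N -> (t%:Z <= Tmax d eps eps1)%R -> (t <= t0)%N ->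
     forall f : fam d, is_family k f -> f.1 \notin (st t).2 ->
       `|Hh t f - Hfam P f| <= eps_r eps1 t / 2) ->
  (#|Vs| <= #|(st t0.+1).1|)%N.
Proof.
move=> _ _ g0 e0 e10 stab t01 last_round _ st1 runs not_done event.
have d0 := dim_gt0_of_eps_r_le e10 last_round.
have est := run_estimates d0 e0 e10 (run_unfinished d0 st1 not_done)
  (fun t tt => (runs t tt).1) event.
have tt0 : (1 <= t0 <= t0)%N by rewrite t01 leqnn.
have cs0 : consistent_state k P (st t0).
  by apply: (run_consistent st1 (fun t tt => (runs t tt).2) est); rewrite t01 leqnSn.
have [cs sub noacc] := round_exec_consistent (est _ tt0) cs0 (subxx _) (runs _ tt0).2.
have := noaccept_step_covers stab cs sub (est _ tt0) (ltW (eps_r_gt0 _ e10))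
  (theta_le_half_gamma _ e10 last_round) noacc.
by case: cs => _ _ -> _; exact: subset_leq_card.
Qed.
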